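(* Let $\mathcal{H}=\mathbb{R}\times\mathbb{R}\times\,]0,+\infty[$. The map associating to an irreducible planar Keplerian branch around ${\rm O}$ the parameters $(\alpha,\beta,\gamma)$ of its unifocal equation $r=\alpha x+\beta y+\gamma$ is a bijection from the space of irreducible planar Keplerian branches around ${\rm O}$ onto $\mathcal{H}$. Under this bijection: the set of irreducible Keplerian branches passing through a point ${\rm A}\neq{\rm O}$ is the intersection with $\mathcal{H}$ of a plane which cuts the boundary $\{\gamma=0\}$ of $\mathcal{H}$; the set of irreducible Keplerian branches passing through two points ${\rm A}$ and ${\rm B}$ not located on the same ray from ${\rm O}$ is the intersection with $\mathcal{H}$ of a straight line; this line cuts the boundary of $\mathcal{H}$, except if ${\rm O}$ lies on the open segment $]{\rm A},{\rm B}[$, in which case the line is contained in $\mathcal{H}$ and $\gamma$ is constant on the line.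
   Context: Work in the Euclidean plane $\mathbb{R}^2={\rm O}xy$ with origin ${\rm O}$, $r=\sqrt{x^2+y^2}$, and Newton's system $\ddot q=-q/r^3$. An extended solution is a continuous path $t\mapsto q(t)$ which is an analytic solution except at a discrete set of collision times where $q={\rm O}$, at which the motion bounces back along the same ray with the same energy; a Keplerian branch around ${\rm O}$ is the image of an extended solution. A branch is irreducible if it is not contained in a line (i.e. it is not rectilinear). For a nonrectilinear solution $q=(x,y)$, with $C=x\dot y-y\dot x$, $\alpha=\frac{x}{r}-\dot yC$, $\beta=\frac{y}{r}+\dot xC$ (constants of motion) and $\gamma=C^2>0$, the branch is exactly the set of points satisfying $r=\alpha x+\beta y+\gamma$, called its unifocal equation. A ray is a closed half-line from ${\rm O}$. *)

From Stdlib Require Import Reals.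
From Coquelicot Require Import Coquelicot.
Open Scope R_scope.

Definition radius (p : R * R) : R := sqrt (fst p ^ 2 + snd p ^ 2).

Definition collision (x y : R -> R) (t : R) : Prop := x t = 0 /\ y t = 0.

Definition newton_at (x y : R -> R) (t : R) : Prop :=
  let r := radius (x t, y t) in
  ex_derive x t /\ ex_derive y t /\
  is_derive (Derive x) t (- x t / r ^ 3) /\
  is_derive (Derive y) t (- y t / r ^ 3).

Definition energy (x y : R -> R) (t : R) : R :=
  ((Derive x t) ^ 2 + (Derive y t) ^ 2) / 2 - / radius (x t, y t).

(* At a collision time t0 the motion bounces back along the same ray with the
   same energy: near t0 (before and after) the motion stays on one ray of
   direction u, and the energy before t0 equals the energy after t0. *)
Definition bounce (x y : R -> R) (t0 : R) : Prop :=
  exists u1 u2 eps, (u1, u2) <> (0, 0) /\ 0 < eps /\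
    (forall t, Rabs (t - t0) < eps ->
       exists s, 0 <= s /\ x t = s * u1 /\ y t = s * u2) /\
    (forall t1 t2, t0 - eps < t1 < t0 -> t0 < t2 < t0 + eps ->
       energy x y t1 = energy x y t2).

Definition extended_solution (x y : R -> R) : Prop :=
  (forall t, continuous x t /\ continuous y t) /\
  (forall t, ~ collision x y t -> newton_at x y t) /\
  (forall t0, collision x y t0 ->
     (exists eps, 0 < eps /\
        forall t, 0 < Rabs (t - t0) < eps -> ~ collision x y t) /\
     bounce x y t0).

Definition keplerian_branch (K : R * R -> Prop) : Prop :=
  exists x y : R -> R, extended_solution x y /\
    forall p, K p <-> exists t, p = (x t, y t).

Definition irreducible (K : R * R -> Prop) : Prop :=
  ~ (exists a b c, (a, b) <> (0, 0) /\
       forall p, K p -> a * fst p + b * snd p + c = 0).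

Definition unifocal (al be ga : R) (p : R * R) : Prop :=
  radius p = al * fst p + be * snd p + ga.

Definition same_ray (A B : R * R) : Prop :=
  exists u1 u2 s t, (u1, u2) <> (0, 0) /\ 0 <= s /\ 0 <= t /\
    A = (s * u1, s * u2) /\ B = (t * u1, t * u2).

Definition O_in_open_segment (A B : R * R) : Prop :=
  exists t, 0 < t < 1 /\
    (1 - t) * fst A + t * fst B = 0 /\ (1 - t) * snd A + t * snd B = 0.

(* Along a collision-free motion the angular momentum C = x y' - y x' and the vector
   (alpha, beta) = q / r - C (y', - x') are conserved, and r = alpha x + beta y + C^2 holds
   identically, so a branch lies on a unifocal curve.  A collision forces the whole motion onto the
   line of its bounce: the set of times near which the motion stays on that line is open, and it is
   closed since at a regular limit time C = 0 freezes the direction of q, while at a collision time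
   the bounce ray meets the line away from O.  For an irreducible branch C <> 0; writing
   (alpha, beta) = e (cos, sin) of some angle, the polar angle theta measured from that axis obeys
   theta' = (1 - e cos theta)^2 / C^3, so time is an increasing function of theta, diverging at
   both ends of the arc where 1 - e cos theta > 0.  Hence theta sweeps that whole arc and the branch
   is the whole curve; inverting this Kepler equation conversely produces a motion on any unifocal
   curve with gamma > 0.  Such a curve is not contained in a line, which makes (alpha, beta, gamma)
   unique, and the two last statements are linear algebra in (alpha, beta, gamma). *)

From Stdlib Require Import Reals Lra Psatz Classical ClassicalEpsilon Ranalysis5 Nsatz.
From Coquelicot Require Import Coquelicot.
Open Scope R_scope.

(* Coquelicot states many equalities at its own carrier types, where ring and field fail;
   this restates the goal as an equality in R. *)
Ltac R_eq := match goal with |- ?a = ?b => change (@eq R a b) end.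

Lemma is_derive_val (f : R -> R) t l l' : is_derive f t l -> l = l' -> is_derive f t l'.
Proof. intros H ->; exact H. Qed.

Lemma is_derive_Rplus (f g : R -> R) t df dg : is_derive f t df -> is_derive g t dg ->
  is_derive (fun s => f s + g s) t (df + dg).
Proof. apply (@is_derive_plus R_AbsRing R_NormedModule). Qed.

Lemma is_derive_Rminus (f g : R -> R) t df dg : is_derive f t df -> is_derive g t dg ->
  is_derive (fun s => f s - g s) t (df - dg).
Proof. apply (@is_derive_minus R_AbsRing R_NormedModule). Qed.

Lemma is_derive_Rmult (f g : R -> R) t df dg : is_derive f t df -> is_derive g t dg ->
  is_derive (fun s => f s * g s) t (df * g t + f t * dg).
Proof. intros Hf Hg. apply (is_derive_mult f g t df dg Hf Hg). intros; apply Rmult_comm. Qed.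

Lemma is_derive_Rcomp (f g : R -> R) t df dg : is_derive f (g t) df -> is_derive g t dg ->
  is_derive (fun s => f (g s)) t (dg * df).
Proof. apply (@is_derive_comp R_AbsRing R_NormedModule). Qed.

Lemma is_derive_Rconst (a t : R) : is_derive (fun _ => a) t 0.
Proof. apply (@is_derive_const R_AbsRing R_NormedModule). Qed.

Lemma is_derive_Rid (t : R) : is_derive (fun s => s) t 1.
Proof. apply (@is_derive_id R_AbsRing). Qed.

Lemma is_derive_continuity_pt (f : R -> R) t l : is_derive f t l -> continuity_pt f t.
Proof.
  intros H. apply continuity_pt_filterlim.
  apply (@ex_derive_continuous R_AbsRing R_NormedModule). exists l; exact H.
Qed.

Lemma continuous_eps_delta (f : R -> R) t : continuous f t ->
  forall eps, 0 < eps -> exists d, 0 < d /\ forall s, Rabs (s - t) < d -> Rabs (f s - f t) < eps.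
Proof.
  intros Hc eps He.
  destruct (proj2 (continuity_pt_filterlim f t) Hc eps He) as [d [Hd Hd']].
  exists d; split; auto. intros s Hs.
  destruct (Req_dec s t) as [->|Hne].
  - rewrite Rminus_diag, Rabs_R0; auto.
  - apply Hd'. repeat split; auto.
Qed.

Lemma continuity_pt_eps_delta (f : R -> R) t :
  (forall eps, 0 < eps -> exists d, 0 < d /\ forall s, Rabs (s - t) < d -> Rabs (f s - f t) < eps) ->
  continuity_pt f t.
Proof.
  intros H eps Heps. destruct (H eps Heps) as [d [Hd Hd']].
  exists d; split; auto. intros s [_ Hs]. apply Hd'; auto.
Qed.

Lemma locally_ball (P : R -> Prop) z d : 0 < d -> (forall s, Rabs (s - z) < d -> P s) -> locally z P.
Proof. intros Hd H. exists (mkposreal d Hd). intros s Hs. apply H. exact Hs. Qed.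

Lemma is_derive_0_eq_on (f : R -> R) a b : (forall s, a < s < b -> is_derive f s 0) ->
  forall s1 s2, a < s1 < b -> a < s2 < b -> f s1 = f s2.
Proof.
  intros H s1 s2 H1 H2.
  assert (Hin : forall z, Rmin s1 s2 <= z <= Rmax s1 s2 -> a < z < b).
  { intros z Hz. split.
    - apply Rlt_le_trans with (Rmin s1 s2); [apply Rmin_glb_lt|]; lra.
    - apply Rle_lt_trans with (Rmax s1 s2); [|apply Rmax_lub_lt]; lra. }
  destruct (MVT_gen f s1 s2 (fun _ => 0)) as [c [_ Hc]].
  - intros z Hz. apply H, Hin. lra.
  - intros z Hz. apply is_derive_continuity_pt with 0, H, Hin, Hz.
  - lra.
Qed.

Lemma is_derive_0_eq (f : R -> R) : (forall s, is_derive f s 0) -> forall s1 s2, f s1 = f s2.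
Proof.
  intros H s1 s2. apply (is_derive_0_eq_on f (Rmin s1 s2 - 1) (Rmax s1 s2 + 1)); [intros; apply H| |].
  - generalize (Rmin_l s1 s2) (Rmax_l s1 s2); lra.
  - generalize (Rmin_r s1 s2) (Rmax_r s1 s2); lra.
Qed.

Lemma is_derive_nonneg_le (F dF : R -> R) a b : a <= b ->
  (forall s, a <= s <= b -> is_derive F s (dF s)) -> (forall s, a <= s <= b -> 0 <= dF s) ->
  F a <= F b.
Proof.
  intros Hab HD Hp. destruct (MVT_gen F a b dF) as [c [Hc Hc']].
  - intros z Hz. apply HD. rewrite Rmin_left, Rmax_right in Hz; lra.
  - intros z Hz. apply is_derive_continuity_pt with (dF z). apply HD.
    rewrite Rmin_left, Rmax_right in Hz; lra.
  - rewrite Rmin_left, Rmax_right in Hc by lra. assert (0 <= dF c) by (apply Hp; lra). nra.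
Qed.

Lemma IVT_le (f : R -> R) a b y : a <= b -> (forall s, a <= s <= b -> continuity_pt f s) ->
  f a <= y <= f b -> exists s, a <= s <= b /\ f s = y.
Proof.
  intros [Hab| <-] Hc Hy.
  - destruct (f_interv_is_interv f a b y Hab Hy Hc) as [s Hs]. exists s; auto.
  - exists a; split; lra.
Qed.

Lemma R_connected_right (Z : R -> Prop) t0 :
  (forall t, Z t -> exists d, 0 < d /\ forall s, Rabs (s - t) < d -> Z s) ->
  (forall b, (forall eps, 0 < eps -> exists z, Z z /\ Rabs (z - b) < eps) -> Z b) ->
  Z t0 -> forall t, t0 <= t -> Z t.
Proof.
  intros Hop Hcl H0 t Ht.
  set (E := fun s => t0 <= s <= t /\ forall w, t0 <= w <= s -> Z w).
  assert (E0 : E t0) by (split; [lra|intros w Hw; replace w with t0 by lra; auto]).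
  destruct (completeness E) as [b [Hub Hlub]].
  { exists t. intros s [[_ Hs] _]; exact Hs. }
  { exists t0; exact E0. }
  assert (Hb0 : t0 <= b) by (apply Hub, E0).
  assert (Hbt : b <= t) by (apply Hlub; intros s [[_ Hs] _]; exact Hs).
  assert (Below : forall w, t0 <= w < b -> Z w).
  { intros w Hw. destruct (classic (exists s, E s /\ w < s)) as [[s [[_ Hs] Hws]]|Hn].
    - apply Hs; lra.
    - enough (b <= w) by lra. apply Hlub. intros s Es.
      destruct (Rle_or_lt s w); auto. exfalso; apply Hn; exists s; auto. }
  assert (Zb : Z b).
  { apply Hcl. intros eps Heps. destruct (Req_dec b t0) as [->|Hne].
    - exists t0; split; auto. rewrite Rminus_diag, Rabs_R0; auto.
    - exists (Rmax t0 (b - eps/2)). split.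
      + apply Below. split; [apply Rmax_l|apply Rmax_lub_lt; lra].
      + unfold Rmax; destruct (Rle_dec t0 (b - eps/2)); apply Rabs_def1; lra. }
  destruct (Rle_or_lt t b) as [Htb|Hlt]; [replace t with b by lra; exact Zb|exfalso].
  destruct (Hop b Zb) as [d [Hd Hd']].
  assert (HE : E (Rmin t (b + d/2))).
  { split; [split; [apply Rmin_glb; lra|apply Rmin_l]|].
    intros w [Hw1 Hw2]. destruct (Rlt_or_le w b); [apply Below; lra|].
    apply Hd'. generalize (Rmin_r t (b + d/2)); intro. apply Rabs_def1; lra. }
  apply Hub in HE. unfold Rmin in HE; destruct (Rle_dec t (b + d/2)); lra.
Qed.

Lemma R_connected (Z : R -> Prop) t0 :
  (forall t, Z t -> exists d, 0 < d /\ forall s, Rabs (s - t) < d -> Z s) ->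
  (forall b, (forall eps, 0 < eps -> exists z, Z z /\ Rabs (z - b) < eps) -> Z b) ->
  Z t0 -> forall t, Z t.
Proof.
  intros Hop Hcl H0 t. destruct (Rle_or_lt t0 t); [eapply R_connected_right; eauto|].
  replace t with (- - t) by ring.
  apply (R_connected_right (fun s => Z (- s)) (- t0)); [ | | rewrite Ropp_involutive; auto | lra].
  - intros s Hs. destruct (Hop _ Hs) as [d [Hd Hd']]. exists d; split; auto.
    intros w Hw. apply Hd'. replace (- w - - s) with (- (w - s)) by ring. rewrite Rabs_Ropp; auto.
  - intros b Hb. apply Hcl. intros eps Heps. destruct (Hb eps Heps) as [z [Hz Hz']].
    exists (- z). split; auto. replace (- z - - b) with (- (z - b)) by ring. rewrite Rabs_Ropp; auto.
Qed.

Lemma radius_sq p : radius p ^ 2 = fst p ^ 2 + snd p ^ 2.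
Proof. unfold radius. rewrite pow2_sqrt; [reflexivity | nra]. Qed.

Lemma sum_sq_pos a b : (a, b) <> (0, 0) -> 0 < a ^ 2 + b ^ 2.
Proof.
  intros H. destruct (Req_dec a 0) as [->|Ha]; [destruct (Req_dec b 0) as [->|Hb]|]; [easy| |]; nra.
Qed.

Lemma sum_sq_eq_0 a b : a ^ 2 + b ^ 2 = 0 -> a = 0 /\ b = 0.
Proof.
  intros H. assert (Ha : Rsqr a = 0) by (unfold Rsqr; nra). assert (Hb : Rsqr b = 0) by (unfold Rsqr; nra).
  split; apply Rsqr_0_uniq; auto.
Qed.

Lemma radius_pos p : p <> (0, 0) -> 0 < radius p.
Proof. destruct p as [a b]; intros H. apply sqrt_lt_R0, sum_sq_pos, H. Qed.

Lemma radius_scale k v1 v2 : 0 <= k -> radius (k * v1, k * v2) = k * radius (v1, v2).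
Proof.
  intros Hk. unfold radius; cbn [fst snd].
  replace ((k * v1) ^ 2 + (k * v2) ^ 2) with (k ^ 2 * (v1 ^ 2 + v2 ^ 2)) by ring.
  rewrite sqrt_mult by nra. rewrite sqrt_pow2; auto.
Qed.

Section Conservation.

Variables x y : R -> R.

Definition rad t := radius (x t, y t).
Definition kep_C t := x t * Derive y t - y t * Derive x t.
Definition kep_alpha t := x t / rad t - Derive y t * kep_C t.
Definition kep_beta t := y t / rad t + Derive x t * kep_C t.

Lemma rad_sq t : rad t ^ 2 = x t ^ 2 + y t ^ 2.
Proof. apply radius_sq. Qed.

Lemma rad_pos t : ~ collision x y t -> 0 < rad t.
Proof. intros H. apply radius_pos. intros E; injection E; intros; apply H; split; auto. Qed.

Lemma unifocal_identity t : ~ collision x y t ->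
  rad t = kep_alpha t * x t + kep_beta t * y t + kep_C t ^ 2.
Proof.
  intros Hn. assert (Hp := rad_pos t Hn). assert (H2 := rad_sq t).
  unfold kep_alpha, kep_beta, kep_C. field_simplify; [|lra]. rewrite <- H2. field. lra.
Qed.

Lemma is_derive_rad t dx dy : is_derive x t dx -> is_derive y t dy -> ~ collision x y t ->
  is_derive rad t ((x t * dx + y t * dy) / rad t).
Proof.
  intros Hx Hy Hn. assert (Hp := rad_pos t Hn). assert (H2 := rad_sq t).
  assert (Hs := is_derive_Rplus _ _ _ _ _ (is_derive_Rmult _ _ _ _ _ Hx Hx)
                                         (is_derive_Rmult _ _ _ _ _ Hy Hy)).
  assert (E : sqrt (x t * x t + y t * y t) = rad t) by (unfold rad, radius; simpl; f_equal; ring).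
  assert (H3 := is_derive_sqrt _ _ _ Hs ltac:(simpl in H2; nra)). cbv beta in H3. rewrite E in H3.
  eapply is_derive_val; [eapply is_derive_ext, H3|].
  - intros s. unfold rad, radius; simpl. f_equal; ring.
  - R_eq. field. lra.
Qed.

Lemma newton_at_derive t : newton_at x y t ->
  is_derive x t (Derive x t) /\ is_derive y t (Derive y t) /\
  is_derive (Derive x) t (- x t / rad t ^ 3) /\ is_derive (Derive y) t (- y t / rad t ^ 3).
Proof.
  intros [H1 [H2 H34]]. split; [|split]; [apply Derive_correct..|exact H34]; assumption.
Qed.

Section Regular.

Variable t : R.
Hypothesis Hn : ~ collision x y t.
Hypothesis Hnt : newton_at x y t.

Lemma is_derive_kep_C : is_derive kep_C t 0.
Proof.
  destruct (newton_at_derive t Hnt) as [Hx [Hy [Hx2 Hy2]]]. assert (Hp := rad_pos t Hn).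
  eapply is_derive_val.
  - apply (is_derive_Rminus _ _ _ _ _ (is_derive_Rmult _ _ _ _ _ Hx Hy2) (is_derive_Rmult _ _ _ _ _ Hy Hx2)).
  - R_eq. field. lra.
Qed.

Lemma is_derive_x_over_rad :
  is_derive (fun s => x s / rad s) t (- y t * kep_C t / rad t ^ 3).
Proof.
  destruct (newton_at_derive t Hnt) as [Hx [Hy _]].
  assert (Hp := rad_pos t Hn). assert (H2 := rad_sq t).
  eapply is_derive_val; [apply (is_derive_div _ _ _ _ _ Hx (is_derive_rad t _ _ Hx Hy Hn)); lra|].
  unfold kep_C. R_eq. field_simplify; try lra. rewrite !H2. field. lra.
Qed.

Lemma is_derive_y_over_rad :
  is_derive (fun s => y s / rad s) t (x t * kep_C t / rad t ^ 3).
Proof.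
  destruct (newton_at_derive t Hnt) as [Hx [Hy _]].
  assert (Hp := rad_pos t Hn). assert (H2 := rad_sq t).
  eapply is_derive_val; [apply (is_derive_div _ _ _ _ _ Hy (is_derive_rad t _ _ Hx Hy Hn)); lra|].
  unfold kep_C. R_eq. field_simplify; try lra. rewrite !H2. field. lra.
Qed.

Lemma is_derive_kep_alpha : is_derive kep_alpha t 0.
Proof.
  destruct (newton_at_derive t Hnt) as [_ [_ [_ Hy2]]]. assert (Hp := rad_pos t Hn).
  eapply is_derive_val.
  - apply (is_derive_Rminus _ _ _ _ _ is_derive_x_over_rad (is_derive_Rmult _ _ _ _ _ Hy2 is_derive_kep_C)).
  - R_eq. field. lra.
Qed.

Lemma is_derive_kep_beta : is_derive kep_beta t 0.
Proof.
  destruct (newton_at_derive t Hnt) as [_ [_ [Hx2 _]]]. assert (Hp := rad_pos t Hn).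
  eapply is_derive_val.
  - apply (is_derive_Rplus _ _ _ _ _ is_derive_y_over_rad (is_derive_Rmult _ _ _ _ _ Hx2 is_derive_kep_C)).
  - R_eq. field. lra.
Qed.

End Regular.

Lemma kepler_constants : (forall t, ~ collision x y t) -> (forall t, newton_at x y t) ->
  forall t, kep_C t = kep_C 0 /\ kep_alpha t = kep_alpha 0 /\ kep_beta t = kep_beta 0.
Proof.
  intros Hn Hnt t. split; [|split]; apply is_derive_0_eq; intros s.
  - apply is_derive_kep_C; auto.
  - apply is_derive_kep_alpha; auto.
  - apply is_derive_kep_beta; auto.
Qed.

Lemma orbit_unifocal_constants : (forall t, ~ collision x y t) -> (forall t, newton_at x y t) ->
  forall t, unifocal (kep_alpha 0) (kep_beta 0) (kep_C 0 ^ 2) (x t, y t).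
Proof.
  intros Hn Hnt t. destruct (kepler_constants Hn Hnt t) as [h1 [h2 h3]].
  unfold unifocal; cbn [fst snd]. rewrite <- h1, <- h2, <- h3. fold (rad t).
  apply unifocal_identity, Hn.
Qed.

End Conservation.

Section Collisions.

Variables x y : R -> R.

Definition near_line u1 u2 t :=
  exists d, 0 < d /\ forall s, Rabs (s - t) < d -> x s * u2 - y s * u1 = 0.

Lemma noncollision_nbhd b : continuous x b -> continuous y b -> ~ collision x y b ->
  exists d, 0 < d /\ forall s, Rabs (s - b) < d -> ~ collision x y s.
Proof.
  intros Hx Hy Hn. destruct (Req_dec (x b) 0) as [Hx0|Hx0].
  - assert (Hy0 : y b <> 0) by (intro; apply Hn; split; auto).
    destruct (continuous_eps_delta y b Hy (Rabs (y b)) (Rabs_pos_lt _ Hy0)) as [d [Hd Hd']].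
    exists d; split; auto. intros s Hs [_ Hc]. specialize (Hd' s Hs).
    rewrite Hc, Rminus_0_l, Rabs_Ropp in Hd'. lra.
  - destruct (continuous_eps_delta x b Hx (Rabs (x b)) (Rabs_pos_lt _ Hx0)) as [d [Hd Hd']].
    exists d; split; auto. intros s Hs [Hc _]. specialize (Hd' s Hs).
    rewrite Hc, Rminus_0_l, Rabs_Ropp in Hd'. lra.
Qed.

Lemma kep_C_0_of_near_line u1 u2 z : (u1, u2) <> (0, 0) -> newton_at x y z ->
  near_line u1 u2 z -> kep_C x y z = 0.
Proof.
  intros Hu Hnt [d [Hd Hline]].
  destruct (newton_at_derive x y z Hnt) as [Dx [Dy _]].
  assert (Hz : x z * u2 - y z * u1 = 0) by (apply Hline; rewrite Rminus_diag, Rabs_R0; auto).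
  assert (Hv : Derive x z * u2 - Derive y z * u1 = 0).
  { assert (H1 := is_derive_Rminus _ _ _ _ _ (is_derive_scal _ _ u2 _ Dx) (is_derive_scal _ _ u1 _ Dy)).
    assert (H2 : is_derive (fun s => u2 * x s - u1 * y s) z 0).
    { apply (is_derive_ext_loc (fun _ => 0)); [|apply is_derive_Rconst].
      apply (locally_ball _ z d Hd). intros s Hs. specialize (Hline s Hs). R_eq. lra. }
    apply is_derive_unique in H1. apply is_derive_unique in H2. rewrite H2 in H1. lra. }
  assert (Hq := sum_sq_pos u1 u2 Hu). unfold kep_C.
  apply (Rmult_eq_reg_l (u1 ^ 2 + u2 ^ 2)); [|lra].
  replace ((u1 ^ 2 + u2 ^ 2) * (x z * Derive y z - y z * Derive x z))
    with (u1 * (Derive x z * (x z * u2 - y z * u1) - x z * (Derive x z * u2 - Derive y z * u1))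
          + u2 * (Derive y z * (x z * u2 - y z * u1) - y z * (Derive x z * u2 - Derive y z * u1)))
    by ring.
  rewrite Hz, Hv. ring.
Qed.

(* With zero angular momentum, constancy of (alpha, beta) = (x, y) / r freezes the direction. *)
Lemma near_line_of_kep_C_0 u1 u2 b d z :
  (forall s, b - d < s < b + d -> ~ collision x y s /\ newton_at x y s) ->
  b - d < z < b + d -> kep_C x y z = 0 -> x z * u2 - y z * u1 = 0 ->
  forall s, b - d < s < b + d -> x s * u2 - y s * u1 = 0.
Proof.
  intros Hreg Hz HC Hline s Hs.
  assert (Hconst : forall f : R -> R, (forall w, b - d < w < b + d -> is_derive f w 0) -> f s = f z)
    by (intros f Hf; apply (is_derive_0_eq_on f (b - d) (b + d)); auto).
  assert (EC : kep_C x y s = 0)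
    by (rewrite <- HC; apply Hconst; intros w Hw; apply is_derive_kep_C; apply Hreg; auto).
  assert (EA : kep_alpha x y s = kep_alpha x y z)
    by (apply Hconst; intros w Hw; apply is_derive_kep_alpha; apply Hreg; auto).
  assert (EB : kep_beta x y s = kep_beta x y z)
    by (apply Hconst; intros w Hw; apply is_derive_kep_beta; apply Hreg; auto).
  unfold kep_alpha, kep_beta in EA, EB. rewrite EC, HC, !Rmult_0_r in EA, EB.
  assert (Hrs := rad_pos x y s (proj1 (Hreg s Hs))). assert (Hrz := rad_pos x y z (proj1 (Hreg z Hz))).
  assert (Exs : x s = rad x y s * (x z / rad x y z)) by (rewrite <- (Rminus_0_r (x z / _)), <- EA; field; lra).
  assert (Eys : y s = rad x y s * (y z / rad x y z)) by (rewrite <- (Rplus_0_r (y z / _)), <- EB; field; lra).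
  rewrite Exs, Eys.
  replace (rad x y s * (x z / rad x y z) * u2 - rad x y s * (y z / rad x y z) * u1)
    with (rad x y s / rad x y z * (x z * u2 - y z * u1)) by (field; lra).
  rewrite Hline; ring.
Qed.

Lemma near_line_at_regular u1 u2 b : (u1, u2) <> (0, 0) ->
  continuous x b -> continuous y b -> ~ collision x y b ->
  (forall t, ~ collision x y t -> newton_at x y t) ->
  (forall eps, 0 < eps -> exists z, near_line u1 u2 z /\ Rabs (z - b) < eps) ->
  near_line u1 u2 b.
Proof.
  intros Hu Hcx Hcy Hnb Hnewt Hb.
  destruct (noncollision_nbhd b Hcx Hcy Hnb) as [d [Hd Hd']].
  assert (Hreg : forall s, b - d < s < b + d -> ~ collision x y s /\ newton_at x y s).
  { intros s Hs. assert (Hns : ~ collision x y s) by (apply Hd'; apply Rabs_def1; lra). auto. }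
  destruct (Hb (d/2)) as [z [Hz Hzb]]; [lra|].
  assert (Hzin : b - d < z < b + d) by (apply Rabs_def2 in Hzb; lra).
  assert (HC : kep_C x y z = 0) by (apply (kep_C_0_of_near_line u1 u2); auto; apply Hreg; auto).
  destruct Hz as [dz [Hdz Hline]].
  exists d; split; auto. intros s Hs.
  apply (near_line_of_kep_C_0 u1 u2 b d z); auto.
  - apply Hline. rewrite Rminus_diag, Rabs_R0; auto.
  - apply Rabs_def2 in Hs; lra.
Qed.

(* Just after a collision the motion runs along the bounce ray, which meets the line only at O
   unless it is contained in it. *)
Lemma near_line_at_collision u1 u2 b : collision x y b ->
  (exists e, 0 < e /\ forall t, 0 < Rabs (t - b) < e -> ~ collision x y t) -> bounce x y b ->
  (forall eps, 0 < eps -> exists z, near_line u1 u2 z /\ Rabs (z - b) < eps) ->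
  near_line u1 u2 b.
Proof.
  intros Hcb [ed [Hed Hdisc]] [w1 [w2 [eb [Hw [Heb [Hray _]]]]]] Hb.
  set (ep := Rmin eb ed). assert (Hep : 0 < ep) by (apply Rmin_glb_lt; auto).
  assert (ep <= eb) by apply Rmin_l. assert (ep <= ed) by apply Rmin_r.
  destruct (Hb (ep/2)) as [z [[dz [Hdz Hline]] Hzb]]; [lra|].
  assert (Hs : exists s, 0 < Rabs (s - b) < ep /\ Rabs (s - z) < dz).
  { destruct (Req_dec z b) as [->|Hne].
    - set (m := Rmin dz ep). assert (0 < m) by (apply Rmin_glb_lt; auto).
      assert (m <= dz) by apply Rmin_l. assert (m <= ep) by apply Rmin_r.
      exists (b + m / 2). replace (b + m / 2 - b) with (m / 2) by ring.
      rewrite Rabs_right by lra. lra.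
    - exists z. rewrite Rminus_diag, Rabs_R0. split; [split; [apply Rabs_pos_lt|]|]; lra. }
  destruct Hs as [s [[Hs1 Hs2] Hs3]].
  destruct (Hray s ltac:(lra)) as [sig [_ [Ex Ey]]].
  assert (Hns : ~ collision x y s) by (apply Hdisc; lra).
  assert (Hf := Hline s Hs3). rewrite Ex, Ey in Hf.
  assert (Hsig : sig <> 0) by (intros ->; apply Hns; split; [rewrite Ex|rewrite Ey]; ring).
  assert (Hw0 : w1 * u2 - w2 * u1 = 0).
  { apply (Rmult_eq_reg_l sig); auto. rewrite Rmult_0_r, <- Hf. ring. }
  exists eb; split; auto. intros s' Hs'. destruct (Hray s' Hs') as [sg [_ [E1 E2]]].
  rewrite E1, E2. replace (sg * w1 * u2 - sg * w2 * u1) with (sg * (w1 * u2 - w2 * u1)) by ring.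
  rewrite Hw0; ring.
Qed.

Lemma collision_rectilinear t0 : extended_solution x y -> collision x y t0 ->
  exists u1 u2, (u1, u2) <> (0, 0) /\ forall t, x t * u2 - y t * u1 = 0.
Proof.
  intros [Hcont [Hnewt Hcoll]] H0.
  destruct (Hcoll t0 H0) as [_ [u1 [u2 [eps [Hu [Heps [Hray _]]]]]]].
  exists u1, u2; split; auto.
  assert (Hall : forall t, near_line u1 u2 t).
  { apply (R_connected _ t0).
    - intros t [d [Hd Hd']]. exists (d/2); split; [lra|]. intros s Hs.
      exists (d/2); split; [lra|]. intros w Hw. apply Hd'.
      replace (w - t) with ((w - s) + (s - t)) by ring.
      generalize (Rabs_triang (w - s) (s - t)); lra.
    - intros b Hb. destruct (classic (collision x y b)) as [Hcb|Hnb].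
      + destruct (Hcoll b Hcb) as [Hdisc Hbounce]. apply near_line_at_collision; auto.
      + destruct (Hcont b). apply near_line_at_regular; auto.
    - exists eps; split; auto. intros s Hs. destruct (Hray s Hs) as [sg [_ [E1 E2]]].
      rewrite E1, E2; ring. }
  intros t. destruct (Hall t) as [d [Hd Hd']]. apply Hd'. rewrite Rminus_diag, Rabs_R0; auto.
Qed.

End Collisions.

Definition conic_denom e s := 1 - e * cos s.
Definition asymptote_angle e := acos (/ e).

(* The true anomalies at which the conic is at finite distance: all of R for an ellipse,
   the open arc between the two asymptotic directions otherwise. *)
Definition admissible e s := e < 1 \/ asymptote_angle e < s < 2 * PI - asymptote_angle e.

Definition time_density e s := / (conic_denom e s * conic_denom e s).

(* Since d(theta)/dt = C / r^2 = (1 - e cos theta)^2 / C^3 along the orbit, C^3 * kepler_time e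
   measures the time taken by the true anomaly to go from PI to p. *)
Definition kepler_time e p := RInt (time_density e) PI p.

Lemma cos_2PI_minus s : cos (2 * PI - s) = cos s.
Proof. rewrite cos_minus, cos_2PI, sin_2PI; ring. Qed.

Lemma sin_2PI_minus s : sin (2 * PI - s) = - sin s.
Proof. rewrite sin_minus, cos_2PI, sin_2PI; ring. Qed.

Lemma asymptote_angle_spec e : 1 <= e ->
  0 <= asymptote_angle e < PI /\ cos (asymptote_angle e) = / e.
Proof.
  intros He. unfold asymptote_angle.
  assert (H1 : 0 < / e <= 1).
  { split; [apply Rinv_0_lt_compat; lra|]. rewrite <- Rinv_1. apply Rinv_le_contravar; lra. }
  assert (Hc : cos (acos (/ e)) = / e) by (apply cos_acos; lra).
  destruct (acos_bound (/ e)) as [Ha [Hb|Hb]]; [lra|]. rewrite Hb, cos_PI in Hc. lra.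
Qed.

Lemma conic_denom_asymptote e : 1 <= e ->
  conic_denom e (asymptote_angle e) = 0 /\ conic_denom e (2 * PI - asymptote_angle e) = 0.
Proof.
  intros He. destruct (asymptote_angle_spec e He) as [_ Hc].
  unfold conic_denom. rewrite cos_2PI_minus, Hc. split; field; lra.
Qed.

Lemma admissible_denom_pos e s : 0 <= e -> admissible e s -> 0 < conic_denom e s.
Proof.
  intros He Hs; unfold conic_denom. destruct (Rlt_or_le e 1) as [H|Hee].
  - destruct (COS_bound s). nra.
  - destruct Hs as [Hs|[H1 H2]]; [lra|].
    destruct (asymptote_angle_spec e Hee) as [[Hp0 Hp1] Hc].
    assert (cos s < / e).
    { rewrite <- Hc. destruct (Rle_or_lt s PI).
      - apply cos_decreasing_1; lra.
      - rewrite <- cos_2PI_minus. apply cos_decreasing_1; lra. }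
    assert (e * cos s < e * / e) by (apply Rmult_lt_compat_l; lra).
    rewrite Rinv_r in *; lra.
Qed.

Lemma denom_pos_admissible e s : 0 <= e -> 0 <= s < 2 * PI -> 0 < conic_denom e s -> admissible e s.
Proof.
  intros He Hs Hh. destruct (Rlt_or_le e 1) as [Hl|Hee]; [left; auto|right].
  destruct (asymptote_angle_spec e Hee) as [[Hp0 Hp1] Hc]. unfold conic_denom in Hh.
  assert (Hce : cos s < / e) by (apply (Rmult_lt_reg_l e); [|rewrite Rinv_r]; lra).
  split; apply Rnot_le_lt; intro Hle.
  - enough (cos (asymptote_angle e) <= cos s) by lra.
    destruct Hle as [Hlt| ->]; [apply Rlt_le, cos_decreasing_1|]; lra.
  - rewrite <- cos_2PI_minus in Hce. enough (cos (asymptote_angle e) <= cos (2 * PI - s)) by lra.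
    destruct Hle as [Hlt|Heq]; [apply Rlt_le, cos_decreasing_1; lra|].
    replace (2 * PI - s) with (asymptote_angle e) by lra; lra.
Qed.

Lemma admissible_between e a b c : admissible e a -> admissible e b -> a <= c <= b -> admissible e c.
Proof. intros [H|H] [H'|H'] Hc; unfold admissible; try (left; assumption); right; lra. Qed.

Lemma admissible_PI e : 0 <= e -> admissible e PI.
Proof.
  intros He. destruct (Rlt_or_le e 1); [left; auto|right].
  destruct (asymptote_angle_spec e H) as [[Hp0 Hp1] _]. lra.
Qed.

Lemma admissible_reflect e p : admissible e p -> admissible e (2 * PI - p).
Proof. intros [H|H]; [left|right]; lra. Qed.

Lemma admissible_open e s : admissible e s ->
  exists d, 0 < d /\ forall b, Rabs (b - s) < d -> admissible e b.
Proof.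
  intros [H|[H1 H2]]; [exists 1; split; [lra|]; intros; left; auto|].
  exists (Rmin (s - asymptote_angle e) (2 * PI - asymptote_angle e - s)). split; [apply Rmin_glb_lt; lra|].
  intros b Hb. apply Rabs_def2 in Hb.
  generalize (Rmin_l (s - asymptote_angle e) (2 * PI - asymptote_angle e - s))
    (Rmin_r (s - asymptote_angle e) (2 * PI - asymptote_angle e - s)). right; lra.
Qed.

(* The denominator vanishes at both ends of the admissible arc, so it cannot be left. *)
Lemma admissible_of_denom_pos_between e a b : 0 <= e -> admissible e a ->
  (forall c, Rmin a b <= c <= Rmax a b -> 0 < conic_denom e c) -> admissible e b.
Proof.
  intros He Ha Hc. destruct (Rlt_or_le e 1) as [Hl|Hee]; [left; auto|].
  destruct Ha as [Ha|[Ha1 Ha2]]; [lra|].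
  destruct (conic_denom_asymptote e Hee) as [Hz1 Hz2].
  generalize (Rmin_l a b) (Rmin_r a b) (Rmax_l a b) (Rmax_r a b); intros.
  right; split; apply Rnot_le_lt; intro Hle.
  - assert (Hp := Hc (asymptote_angle e)). rewrite Hz1 in Hp. apply (Rlt_irrefl 0), Hp. lra.
  - assert (Hp := Hc (2 * PI - asymptote_angle e)). rewrite Hz2 in Hp. apply (Rlt_irrefl 0), Hp. lra.
Qed.

Lemma angle_of_unit c s : c ^ 2 + s ^ 2 = 1 -> exists p, 0 <= p < 2 * PI /\ cos p = c /\ sin p = s.
Proof.
  intros H. assert (Hc : -1 <= c <= 1) by (split; nra).
  assert (Hs2 : sqrt (1 - c²) = Rabs s) by (rewrite <- sqrt_Rsqr_abs; f_equal; unfold Rsqr; lra).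
  destruct (acos_bound c) as [Ha1 Ha2].
  destruct (Rle_or_lt 0 s) as [Hs|Hs].
  - exists (acos c). split; [generalize PI_RGT_0; lra|].
    rewrite cos_acos, sin_acos, Hs2, Rabs_right; auto; lra.
  - destruct (acos_bound_lt c ltac:(split; nra)) as [Hb1 Hb2].
    exists (2 * PI - acos c). split; [lra|].
    rewrite cos_2PI_minus, sin_2PI_minus, cos_acos, sin_acos, Hs2, Rabs_left; auto. split; [auto|ring].
Qed.

Lemma is_derive_conic_denom e s : is_derive (conic_denom e) s (e * sin s).
Proof.
  eapply is_derive_val.
  - apply is_derive_Rminus; [apply is_derive_Rconst|apply is_derive_scal, is_derive_cos].
  - R_eq; ring.
Qed.

Lemma time_density_pos e s : conic_denom e s <> 0 -> 0 < time_density e s.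
Proof. intros H. apply Rinv_0_lt_compat. assert (0 < conic_denom e s * conic_denom e s) by nra. lra. Qed.

Lemma time_density_continuous e s : conic_denom e s <> 0 -> continuous (time_density e) s.
Proof.
  intros H. apply (@ex_derive_continuous R_AbsRing R_NormedModule). eexists.
  apply (is_derive_inv (fun s => conic_denom e s * conic_denom e s)).
  - apply is_derive_Rmult; apply is_derive_conic_denom.
  - apply Rmult_integral_contrapositive; auto.
Qed.

Lemma time_density_reflect e s : time_density e (2 * PI - s) = time_density e s.
Proof. unfold time_density, conic_denom. rewrite cos_2PI_minus. reflexivity. Qed.

Section KeplerTime.

Variable e : R.
Hypothesis He : 0 <= e.

Lemma ex_RInt_time_density a b : admissible e a -> admissible e b -> ex_RInt (time_density e) a b.
Proof.
  intros Ha Hb. apply (@ex_RInt_continuous R_CompleteNormedModule). intros z Hz.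
  apply time_density_continuous. enough (0 < conic_denom e z) by lra.
  apply admissible_denom_pos; auto.
  destruct (Rle_or_lt a b).
  - rewrite Rmin_left, Rmax_right in Hz by lra. apply (admissible_between e a b); auto.
  - rewrite Rmin_right, Rmax_left in Hz by lra. apply (admissible_between e b a); auto.
Qed.

Lemma kepler_time_PI : kepler_time e PI = 0.
Proof. unfold kepler_time. rewrite RInt_point. reflexivity. Qed.

Lemma is_derive_kepler_time p : admissible e p -> is_derive (kepler_time e) p (time_density e p).
Proof.
  intros Hp. apply is_derive_RInt with PI.
  - destruct (admissible_open e p Hp) as [d [Hd Hd']]. apply (locally_ball _ p d Hd). intros b Hb.
    apply (@RInt_correct R_CompleteNormedModule), ex_RInt_time_density; auto. apply admissible_PI; auto.
  - apply time_density_continuous. apply admissible_denom_pos in Hp; auto. lra.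
Qed.

Lemma kepler_time_continuity p : admissible e p -> continuity_pt (kepler_time e) p.
Proof. intros; eapply is_derive_continuity_pt, is_derive_kepler_time; auto. Qed.

Lemma kepler_time_incr a b : admissible e a -> admissible e b -> a < b -> kepler_time e a < kepler_time e b.
Proof.
  intros Ha Hb Hab. assert (Hin : forall z, a <= z <= b -> admissible e z)
    by (intros; apply (admissible_between e a b); auto).
  destruct (MVT_gen (kepler_time e) a b (time_density e)) as [c [Hc Hc']];
    rewrite ?Rmin_left, ?Rmax_right in * by lra.
  - intros z Hz. apply is_derive_kepler_time, Hin; lra.
  - intros z Hz. apply kepler_time_continuity, Hin; lra.
  - assert (0 < time_density e c); [|nra].
    apply time_density_pos. assert (0 < conic_denom e c) by (apply admissible_denom_pos, Hin; lra). lra.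
Qed.

Lemma kepler_time_le a b : admissible e a -> admissible e b -> a <= b -> kepler_time e a <= kepler_time e b.
Proof. intros Ha Hb [H| <-]; [apply Rlt_le, kepler_time_incr|]; auto; lra. Qed.

Lemma kepler_time_inj a b : admissible e a -> admissible e b -> kepler_time e a = kepler_time e b -> a = b.
Proof.
  intros Ha Hb H. destruct (Rtotal_order a b) as [h|[h|h]]; auto;
    apply kepler_time_incr in h; auto; lra.
Qed.

Lemma kepler_time_reflect p : admissible e p -> kepler_time e (2 * PI - p) = - kepler_time e p.
Proof.
  intros Hp. unfold kepler_time.
  assert (Hex : ex_RInt (time_density e) (-1 * PI + 2 * PI) (-1 * p + 2 * PI)).
  { apply ex_RInt_time_density; [replace (-1 * PI + 2 * PI) with PI by ring; apply admissible_PI; auto|].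
    replace (-1 * p + 2 * PI) with (2 * PI - p) by ring. apply admissible_reflect; auto. }
  assert (H := RInt_comp_lin (time_density e) (-1) (2 * PI) PI p Hex).
  replace (-1 * PI + 2 * PI) with PI in H by ring. replace (-1 * p + 2 * PI) with (2 * PI - p) in H by ring.
  rewrite <- H. rewrite <- (RInt_opp (V := R_CompleteNormedModule)).
  - apply RInt_ext. intros z _. unfold scal, opp; simpl. unfold mult; simpl.
    replace (-1 * z + 2 * PI) with (2 * PI - z) by ring. rewrite time_density_reflect. ring.
  - apply ex_RInt_time_density; [apply admissible_PI|]; auto.
Qed.

Lemma kepler_time_ge_of_density_ge (G dG : R -> R) a b : a <= b ->
  (forall z, a <= z <= b -> admissible e z) ->
  (forall z, a <= z <= b -> is_derive G z (dG z)) ->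
  (forall z, a <= z <= b -> dG z <= time_density e z) ->
  G b - G a <= kepler_time e b - kepler_time e a.
Proof.
  intros Hab Hadm HG Hle.
  enough (kepler_time e a - G a <= kepler_time e b - G b) by lra.
  apply (is_derive_nonneg_le (fun z => kepler_time e z - G z) (fun z => time_density e z - dG z)); auto.
  - intros z Hz. apply is_derive_Rminus; auto. apply is_derive_kepler_time; auto.
  - intros z Hz. specialize (Hle z Hz). lra.
Qed.

Lemma inv_sq_le a b : 0 < a -> a <= b -> / (b * b) <= / (a * a).
Proof. intros. apply Rinv_le_contravar; nra. Qed.

Lemma conic_denom_le_asymptote s : 1 <= e -> PI <= s <= 2 * PI - asymptote_angle e ->
  conic_denom e s <= e * (2 * PI - asymptote_angle e - s).
Proof.
  intros He1 Hs. set (M := 2 * PI - asymptote_angle e).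
  assert (HM : conic_denom e M = 0) by apply (conic_denom_asymptote e He1).
  enough (conic_denom e s - e * (M - s) <= conic_denom e M - e * (M - M)) by lra.
  apply (is_derive_nonneg_le (fun z => conic_denom e z - e * (M - z)) (fun z => e * sin z + e));
    [unfold M in *; lra| |].
  - intros z _. eapply is_derive_val.
    + apply is_derive_Rminus; [apply is_derive_conic_denom|apply is_derive_scal].
      apply is_derive_Rminus; [apply is_derive_Rconst|apply is_derive_Rid].
    + R_eq; ring.
  - intros z _. generalize (SIN_bound z); nra.
Qed.

Lemma kepler_time_unbounded_above_ellipse tau : e < 1 ->
  exists p, admissible e p /\ PI <= p /\ tau <= kepler_time e p.
Proof.
  intros Hl.
  set (k := / ((1 + e) * (1 + e))). assert (Hk : 0 < k) by (apply Rinv_0_lt_compat; nra).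
  set (p := PI + Rabs tau / k + 1).
  assert (0 <= Rabs tau / k) by (apply Rdiv_le_0_compat; [apply Rabs_pos|auto]).
  exists p. split; [left; auto|split; [unfold p; lra|]].
  assert (HH := kepler_time_ge_of_density_ge (fun z => k * z) (fun _ => k) PI p ltac:(unfold p; lra)).
  rewrite kepler_time_PI in HH.
  enough (k * p - k * PI <= kepler_time e p - 0).
  { replace (k * p - k * PI) with (Rabs tau + k) in * by (unfold p; field; lra).
    generalize (Rle_abs tau); lra. }
  apply HH; intros z _; [left; auto| |].
  - eapply is_derive_val; [apply is_derive_scal, is_derive_Rid|R_eq; ring].
  - assert (Hz : 0 < conic_denom e z) by (apply admissible_denom_pos; auto; left; auto).
    apply inv_sq_le; auto. unfold conic_denom. generalize (COS_bound z); nra.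
Qed.

(* The density blows up like the inverse square of the distance to the asymptotic direction. *)
Lemma kepler_time_unbounded_above_nonelliptic tau : 1 <= e ->
  exists p, admissible e p /\ PI <= p /\ tau <= kepler_time e p.
Proof.
  intros Hge.
  destruct (asymptote_angle_spec e Hge) as [[Hp0 Hp1] Hc].
  set (M := 2 * PI - asymptote_angle e). set (L := M - PI).
  assert (EM : M = 2 * PI - asymptote_angle e) by reflexivity.
  assert (EL : L = M - PI) by reflexivity. clearbody M L. assert (HL : 0 < L) by lra.
  assert (Hden : 0 < e * e * Rabs tau + / L).
  { assert (0 < / L) by (apply Rinv_0_lt_compat; auto). generalize (Rabs_pos tau). nra. }
  set (w := / (e * e * Rabs tau + / L)). assert (Hw : 0 < w) by (apply Rinv_0_lt_compat; auto).
  assert (HwL : w <= L).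
  { unfold w. rewrite <- (Rinv_inv L) at 2. apply Rinv_le_contravar; [apply Rinv_0_lt_compat; auto|].
    generalize (Rabs_pos tau). nra. }
  exists (M - w). split; [right; lra|split; [lra|]].
  assert (HH := kepler_time_ge_of_density_ge (fun z => / (e * e * (M - z)))
                  (fun z => / (e * e * ((M - z) * (M - z)))) PI (M - w) ltac:(lra)).
  rewrite kepler_time_PI in HH.
  enough (/ (e * e * (M - (M - w))) - / (e * e * (M - PI)) <= kepler_time e (M - w) - 0).
  { replace (M - (M - w)) with w in * by ring. replace (M - PI) with L in * by lra.
    assert (E1 : / (e * e * w) = Rabs tau + / (e * e * L))
      by (unfold w; rewrite Rinv_mult, Rinv_inv; field; split; lra).
    rewrite E1 in *. generalize (Rle_abs tau). lra. }
  apply HH; intros z Hz; [right; lra| |].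
  - eapply is_derive_val.
    + apply (is_derive_inv (fun z => e * e * (M - z))).
      * apply is_derive_scal, is_derive_Rminus; [apply is_derive_Rconst|apply is_derive_Rid].
      * apply Rgt_not_eq, Rmult_lt_0_compat; [nra|lra].
    + R_eq. field. lra.
  - assert (Hz' : 0 < conic_denom e z) by (apply admissible_denom_pos; auto; right; lra).
    assert (H1 : conic_denom e z <= e * (M - z)) by (rewrite EM; apply conic_denom_le_asymptote; auto; lra).
    replace (e * e * ((M - z) * (M - z))) with (e * (M - z) * (e * (M - z))) by ring.
    apply inv_sq_le; auto.
Qed.

Lemma kepler_time_unbounded_above tau :
  exists p, admissible e p /\ PI <= p /\ tau <= kepler_time e p.
Proof.
  destruct (Rlt_or_le e 1).
  - apply kepler_time_unbounded_above_ellipse; auto.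
  - apply kepler_time_unbounded_above_nonelliptic; auto.
Qed.

Lemma kepler_time_unbounded_below tau :
  exists p, admissible e p /\ p <= PI /\ kepler_time e p <= tau.
Proof.
  destruct (kepler_time_unbounded_above (- tau)) as [p [Hp [HPI Ht]]].
  exists (2 * PI - p). rewrite kepler_time_reflect by auto.
  split; [apply admissible_reflect; auto|lra].
Qed.

Lemma kepler_time_surj tau : exists p, admissible e p /\ kepler_time e p = tau.
Proof.
  destruct (kepler_time_unbounded_above tau) as [p1 [I1 [P1 H1]]].
  destruct (kepler_time_unbounded_below tau) as [p2 [I2 [P2 H2]]].
  assert (Hin : forall s, p2 <= s <= p1 -> admissible e s) by (intros; apply (admissible_between e p2 p1); auto).
  destruct (IVT_le (kepler_time e) p2 p1 tau) as [p [Hp Hp']]; [lra| |lra|].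
  - intros s Hs. apply kepler_time_continuity, Hin, Hs.
  - exists p; split; auto.
Qed.

End KeplerTime.

Definition kepler_time_inv e tau :=
  epsilon (inhabits 0) (fun p => admissible e p /\ kepler_time e p = tau).

Section KeplerTimeInverse.

Variable e : R.
Hypothesis He : 0 <= e.

Let S := kepler_time_inv e.

Lemma kepler_time_inv_spec tau : admissible e (S tau) /\ kepler_time e (S tau) = tau.
Proof.
  apply (epsilon_spec (inhabits 0) (fun p => admissible e p /\ kepler_time e p = tau)).
  apply kepler_time_surj, He.
Qed.

Lemma kepler_time_inv_le a b : a <= b -> S a <= S b.
Proof.
  intros Hab. destruct (kepler_time_inv_spec a) as [Ia Ta]. destruct (kepler_time_inv_spec b) as [Ib Tb].
  destruct (Rle_or_lt (S a) (S b)) as [h|h]; auto.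
  apply (kepler_time_incr e) in h; auto. lra.
Qed.

Lemma kepler_time_inv_continuity tau : continuity_pt S tau.
Proof.
  apply continuity_pt_eps_delta. intros eps Heps.
  destruct (kepler_time_inv_spec tau) as [It Tt].
  destruct (admissible_open e (S tau) It) as [d0 [Hd0 Hd0']].
  set (ep := Rmin eps d0 / 2).
  assert (Hep : 0 < ep /\ ep < eps /\ ep < d0).
  { assert (0 < Rmin eps d0) by (apply Rmin_glb_lt; auto).
    generalize (Rmin_l eps d0) (Rmin_r eps d0). unfold ep; lra. }
  clearbody ep. destruct Hep as [Hep [Hep2 Hep3]].
  assert (Im : admissible e (S tau - ep)) by (apply Hd0'; rewrite Rabs_left; lra).
  assert (Ip : admissible e (S tau + ep)) by (apply Hd0'; rewrite Rabs_right; lra).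
  assert (Tm : kepler_time e (S tau - ep) < tau) by (apply Rlt_le_trans with (kepler_time e (S tau)); [apply kepler_time_incr; auto|]; lra).
  assert (Tp : tau < kepler_time e (S tau + ep)) by (apply Rle_lt_trans with (kepler_time e (S tau)); [|apply kepler_time_incr; auto]; lra).
  set (dm := tau - kepler_time e (S tau - ep)). set (dp := kepler_time e (S tau + ep) - tau).
  exists (Rmin dm dp). split; [apply Rmin_glb_lt; unfold dm, dp; lra|].
  intros s Hs. apply Rabs_def2 in Hs. generalize (Rmin_l dm dp) (Rmin_r dm dp). intros. unfold dm, dp in *.
  destruct (kepler_time_inv_spec s) as [Is Ts].
  assert (S tau - ep < S s).
  { destruct (Rlt_or_le (S tau - ep) (S s)) as [h|h]; auto.
    apply (kepler_time_le e) in h; auto. lra. }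
  assert (S s < S tau + ep).
  { destruct (Rlt_or_le (S s) (S tau + ep)) as [h|h]; auto.
    apply (kepler_time_le e) in h; auto. lra. }
  apply Rabs_def1; lra.
Qed.

Lemma is_derive_kepler_time_inv tau :
  is_derive S tau (conic_denom e (S tau) * conic_denom e (S tau)).
Proof.
  assert (Hadm : forall a, S (tau - 1) <= a <= S (tau + 1) -> admissible e a)
    by (intros; apply (admissible_between e (S (tau - 1)) (S (tau + 1))); auto; apply kepler_time_inv_spec).
  assert (Hder : forall a, S (tau - 1) <= a <= S (tau + 1) -> derivable_pt (kepler_time e) a).
  { intros a Ha. apply ex_derive_Reals_0. exists (time_density e a). apply is_derive_kepler_time; auto. }
  assert (Hmid : S (tau - 1) <= S tau <= S (tau + 1)) by (split; apply kepler_time_inv_le; lra).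
  destruct (kepler_time_inv_spec tau) as [It Tt].
  assert (Hdens : Derive (kepler_time e) (S tau) = time_density e (S tau))
    by (apply is_derive_unique, is_derive_kepler_time; auto).
  assert (Hh : 0 < conic_denom e (S tau)) by (apply admissible_denom_pos; auto).
  assert (HD := derivable_pt_lim_recip_interv (kepler_time e) S (tau - 1) (tau + 1) tau Hder
     (kepler_time_inv_continuity tau) ltac:(lra) ltac:(lra) Hmid).
  apply is_derive_Reals. rewrite Derive_Reals, Hdens in HD.
  replace (conic_denom e (S tau) * conic_denom e (S tau)) with (1 / time_density e (S tau))
    by (unfold time_density; field; lra).
  apply HD.
  - intros z _. apply kepler_time_inv_spec.
  - apply Rgt_not_eq, time_density_pos. lra.
Qed.

End KeplerTimeInverse.

Lemma polar_form al be : exists e c1 s1, 0 <= e /\ c1 ^ 2 + s1 ^ 2 = 1 /\ al = e * c1 /\ be = e * s1.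
Proof.
  set (e := sqrt (al ^ 2 + be ^ 2)).
  assert (He : 0 <= e) by apply sqrt_pos.
  assert (He2 : e ^ 2 = al ^ 2 + be ^ 2) by (unfold e; rewrite pow2_sqrt; nra).
  destruct (Req_dec e 0) as [E|E].
  - exists e, 1, 0. rewrite E in He2. repeat split; auto; nra.
  - exists e, (al / e), (be / e). repeat split; auto; [|field; auto..].
    field_simplify; auto. rewrite <- He2. field; auto.
Qed.

Lemma unifocal_nonzero al be ga P : 0 < ga -> unifocal al be ga P -> P <> (0, 0).
Proof.
  intros Hga HP ->. unfold unifocal, radius in HP; cbn [fst snd] in HP.
  replace (0 ^ 2 + 0 ^ 2) with 0 in HP by ring. rewrite sqrt_0 in HP. lra.
Qed.

Definition rot_dir c1 s1 (P : R * R) :=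
  ((c1 * fst P + s1 * snd P) / radius P, (- s1 * fst P + c1 * snd P) / radius P).

Section RotatedDirection.

Variables c1 s1 : R.
Hypothesis Hcs : c1 ^ 2 + s1 ^ 2 = 1.

Lemma rot_dir_unit P : P <> (0, 0) -> fst (rot_dir c1 s1 P) ^ 2 + snd (rot_dir c1 s1 P) ^ 2 = 1.
Proof.
  intros HP. assert (Hr := radius_pos P HP). assert (Hr2 := radius_sq P).
  unfold rot_dir; cbn [fst snd].
  replace (((c1 * fst P + s1 * snd P) / radius P) ^ 2 + ((- s1 * fst P + c1 * snd P) / radius P) ^ 2)
    with ((c1 ^ 2 + s1 ^ 2) * (fst P ^ 2 + snd P ^ 2) / radius P ^ 2) by (field; lra).
  rewrite Hcs, <- Hr2. field. lra.
Qed.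

Lemma unifocal_rot_dir e ga P : P <> (0, 0) -> unifocal (e * c1) (e * s1) ga P ->
  1 - e * fst (rot_dir c1 s1 P) = ga / radius P.
Proof.
  intros HP Hu. assert (Hr := radius_pos P HP). unfold unifocal in Hu. unfold rot_dir; cbn [fst snd].
  replace ga with (radius P - (e * c1 * fst P + e * s1 * snd P)) by lra. field. lra.
Qed.

Lemma rot_dir_inj P Q : P <> (0, 0) -> radius P = radius Q -> rot_dir c1 s1 P = rot_dir c1 s1 Q -> P = Q.
Proof.
  intros HP Hr E. assert (HrP := radius_pos P HP). unfold rot_dir in E. rewrite Hr in E.
  injection E. intros E2 E1.
  assert (F1 : c1 * fst P + s1 * snd P = c1 * fst Q + s1 * snd Q)
    by (apply (Rmult_eq_reg_r (/ radius Q)); [exact E1|apply Rinv_neq_0_compat; lra]).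
  assert (F2 : - s1 * fst P + c1 * snd P = - s1 * fst Q + c1 * snd Q)
    by (apply (Rmult_eq_reg_r (/ radius Q)); [exact E2|apply Rinv_neq_0_compat; lra]).
  destruct P as [a b], Q as [a' b']; cbn [fst snd] in *. f_equal.
  - replace a with ((c1 ^ 2 + s1 ^ 2) * a) by (rewrite Hcs; ring).
    replace a' with ((c1 ^ 2 + s1 ^ 2) * a') by (rewrite Hcs; ring).
    replace ((c1 ^ 2 + s1 ^ 2) * a) with (c1 * (c1 * a + s1 * b) - s1 * (- s1 * a + c1 * b)) by ring.
    rewrite F1, F2. ring.
  - replace b with ((c1 ^ 2 + s1 ^ 2) * b) by (rewrite Hcs; ring).
    replace b' with ((c1 ^ 2 + s1 ^ 2) * b') by (rewrite Hcs; ring).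
    replace ((c1 ^ 2 + s1 ^ 2) * b) with (s1 * (c1 * a + s1 * b) + c1 * (- s1 * a + c1 * b)) by ring.
    rewrite F1, F2. ring.
Qed.

End RotatedDirection.

Lemma angle_lift (U1 U2 om : R -> R) p0 : (forall t, continuous om t) ->
  (forall t, is_derive U1 t (- om t * U2 t)) -> (forall t, is_derive U2 t (om t * U1 t)) ->
  cos p0 = U1 0 -> sin p0 = U2 0 ->
  exists th, th 0 = p0 /\ (forall t, is_derive th t (om t)) /\
    (forall t, cos (th t) = U1 t /\ sin (th t) = U2 t).
Proof.
  intros Hom HU1 HU2 Hc0 Hs0.
  set (th := fun t => p0 + RInt om 0 t).
  assert (Hth : forall t, is_derive th t (om t)).
  { intros t. eapply is_derive_val.
    - apply is_derive_Rplus; [apply is_derive_Rconst|].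
      apply (is_derive_RInt om (fun b => RInt om 0 b) 0 t); [|apply Hom].
      apply (locally_ball _ t 1); [lra|]. intros b _.
      apply (@RInt_correct R_CompleteNormedModule), (@ex_RInt_continuous R_CompleteNormedModule).
      intros; apply Hom.
    - R_eq; ring. }
  assert (Hth0 : th 0 = p0) by (unfold th; rewrite RInt_point; unfold zero; simpl; ring).
  exists th. split; [|split]; auto.
  set (D := fun t => (cos (th t) - U1 t) ^ 2 + (sin (th t) - U2 t) ^ 2).
  assert (HD : forall t, D t = D 0).
  { intros t0. apply is_derive_0_eq. intros t.
    assert (Hc := is_derive_Rcomp cos th t _ _ (is_derive_cos (th t)) (Hth t)).
    assert (Hs := is_derive_Rcomp sin th t _ _ (is_derive_sin (th t)) (Hth t)).
    apply (is_derive_ext (fun t => (cos (th t) - U1 t) * (cos (th t) - U1 t)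
                                  + (sin (th t) - U2 t) * (sin (th t) - U2 t))).
    - intros s; unfold D; R_eq; ring.
    - eapply is_derive_val; [apply is_derive_Rplus; apply is_derive_Rmult; apply is_derive_Rminus; eauto|].
      cbv beta. R_eq; ring. }
  intros t. specialize (HD t). unfold D in HD. rewrite Hth0, Hc0, Hs0 in HD.
  replace ((U1 0 - U1 0) ^ 2 + (U2 0 - U2 0) ^ 2) with 0 in HD by ring.
  destruct (sum_sq_eq_0 (cos (th t) - U1 t) (sin (th t) - U2 t)) as [E1 E2]; [lra|].
  split; apply Rminus_diag_uniq; auto.
Qed.

Section Covering.

Variables x y : R -> R.
Hypothesis Hn : forall t, ~ collision x y t.
Hypothesis Hnt : forall t, newton_at x y t.
Variables e c1 s1 : R.
Hypothesis He : 0 <= e.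
Hypothesis Hcs : c1 ^ 2 + s1 ^ 2 = 1.
Hypothesis Hal : kep_alpha x y 0 = e * c1.
Hypothesis Hbe : kep_beta x y 0 = e * s1.
Hypothesis HC : kep_C x y 0 <> 0.

Let C := kep_C x y 0.
Let U t := rot_dir c1 s1 (x t, y t).
Let om t := C / (rad x y t * rad x y t).

Lemma orbit_unifocal t : unifocal (e * c1) (e * s1) (C ^ 2) (x t, y t).
Proof. rewrite <- Hal, <- Hbe. apply orbit_unifocal_constants; auto. Qed.

Lemma orbit_nonzero t : (x t, y t) <> (0, 0).
Proof. intros E. injection E. intros. apply (Hn t). split; auto. Qed.

Lemma conic_denom_orbit t : 1 - e * fst (U t) = C ^ 2 / rad x y t.
Proof. apply unifocal_rot_dir; auto using orbit_nonzero, orbit_unifocal. Qed.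

Lemma is_derive_rot_dir t :
  is_derive (fun t => fst (U t)) t (- om t * snd (U t)) /\
  is_derive (fun t => snd (U t)) t (om t * fst (U t)).
Proof.
  assert (Hx := is_derive_x_over_rad x y t (Hn t) (Hnt t)).
  assert (Hy := is_derive_y_over_rad x y t (Hn t) (Hnt t)).
  destruct (kepler_constants x y Hn Hnt t) as [h1 _]. rewrite h1 in Hx, Hy. fold C in Hx, Hy.
  assert (Hr := rad_pos x y t (Hn t)).
  assert (Hr' : forall s, rad x y s <> 0) by (intros s; apply Rgt_not_eq, rad_pos, Hn).
  split.
  - apply (is_derive_ext (fun s => c1 * (x s / rad x y s) + s1 * (y s / rad x y s))).
    + intros s. unfold U, rot_dir, rad; cbn [fst snd]. R_eq. field. apply Hr'.
    + eapply is_derive_val; [apply is_derive_Rplus; apply is_derive_scal; eauto|].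
      unfold om, U, rot_dir; cbn [fst snd]. fold (rad x y t). R_eq. field. lra.
  - apply (is_derive_ext (fun s => - s1 * (x s / rad x y s) + c1 * (y s / rad x y s))).
    + intros s. unfold U, rot_dir, rad; cbn [fst snd]. R_eq. field. apply Hr'.
    + eapply is_derive_val; [apply is_derive_Rplus; apply is_derive_scal; eauto|].
      unfold om, U, rot_dir; cbn [fst snd]. fold (rad x y t). R_eq. field. lra.
Qed.

Lemma om_continuous t : continuous om t.
Proof.
  destruct (newton_at_derive x y t (Hnt t)) as [Dx [Dy _]].
  assert (Hr := rad_pos x y t (Hn t)).
  apply (@ex_derive_continuous R_AbsRing R_NormedModule). eexists.
  apply is_derive_div; [apply is_derive_Rconst|apply is_derive_Rmult; apply is_derive_rad; eauto|nra].
Qed.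

Lemma true_anomaly_exists : exists th,
  (forall t, is_derive th t (om t)) /\
  (forall t, cos (th t) = fst (U t) /\ sin (th t) = snd (U t)) /\
  (forall t, admissible e (th t)).
Proof.
  destruct (angle_of_unit (fst (U 0)) (snd (U 0))) as [p0 [Hp0 [Hc0 Hs0]]].
  { apply rot_dir_unit; auto using orbit_nonzero. }
  destruct (angle_lift (fun t => fst (U t)) (fun t => snd (U t)) om p0 om_continuous
              (fun t => proj1 (is_derive_rot_dir t)) (fun t => proj2 (is_derive_rot_dir t)) Hc0 Hs0)
    as [th [Hth0 [Hth Hang]]].
  assert (Hden : forall t, 0 < conic_denom e (th t)).
  { intros t. unfold conic_denom. rewrite (proj1 (Hang t)), conic_denom_orbit.
    apply Rdiv_lt_0_compat; [apply pow2_gt_0, HC|apply rad_pos, Hn]. }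
  exists th. split; [|split]; auto.
  assert (Hcont : continuity th) by (intros t; eapply is_derive_continuity_pt, Hth).
  intros t. apply (admissible_of_denom_pos_between e (th 0)); auto.
  - rewrite Hth0. apply denom_pos_admissible; auto. rewrite <- Hth0. apply Hden.
  - intros c Hc. destruct (IVT_gen th 0 t c Hcont Hc) as [s [_ <-]]. apply Hden.
Qed.

Lemma kepler_equation th : (forall t, is_derive th t (om t)) ->
  (forall t, cos (th t) = fst (U t)) -> (forall t, admissible e (th t)) ->
  forall t, kepler_time e (th t) = kepler_time e (th 0) + t / C ^ 3.
Proof.
  intros Hth Hcos Hadm t0.
  assert (HC3 : C ^ 3 <> 0) by (apply pow_nonzero, HC).
  enough (kepler_time e (th t0) - t0 / C ^ 3 = kepler_time e (th 0) - 0 / C ^ 3)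
    by (unfold Rdiv in *; lra).
  apply (is_derive_0_eq (fun t => kepler_time e (th t) - t / C ^ 3)). intros t.
  assert (Hr := rad_pos x y t (Hn t)).
  eapply is_derive_val.
  - apply is_derive_Rminus.
    + apply (is_derive_Rcomp (kepler_time e) th t); [apply is_derive_kepler_time|]; auto.
    + apply is_derive_div; [apply is_derive_Rid|apply is_derive_Rconst|auto].
  - unfold om, time_density, conic_denom. rewrite Hcos, conic_denom_orbit.
    R_eq. field. split; [apply HC|lra].
Qed.

Lemma orbit_covers_unifocal P : unifocal (e * c1) (e * s1) (C ^ 2) P -> exists t, P = (x t, y t).
Proof.
  intros HP.
  assert (HC2 : 0 < C ^ 2) by (apply pow2_gt_0, HC).
  assert (HP0 := unifocal_nonzero _ _ _ P HC2 HP). assert (HrP := radius_pos P HP0).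
  destruct true_anomaly_exists as [th [Hth [Hang Hadm]]].
  destruct (angle_of_unit (fst (rot_dir c1 s1 P)) (snd (rot_dir c1 s1 P))) as [ph [Hph [Hcph Hsph]]].
  { apply rot_dir_unit; auto. }
  assert (HhP := unifocal_rot_dir c1 s1 e _ P HP0 HP).
  assert (Iph : admissible e ph).
  { apply denom_pos_admissible; auto. unfold conic_denom. rewrite Hcph, HhP.
    apply Rdiv_lt_0_compat; auto. }
  set (ts := (kepler_time e ph - kepler_time e (th 0)) * C ^ 3).
  assert (Hts : th ts = ph).
  { apply (kepler_time_inj e); auto.
    rewrite (kepler_equation th Hth (fun t => proj1 (Hang t)) Hadm ts). unfold ts.
    R_eq. field. apply HC. }
  exists ts. symmetry. apply (rot_dir_inj c1 s1); auto using orbit_nonzero.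
  - assert (E := conic_denom_orbit ts). rewrite <- (proj1 (Hang ts)), Hts, Hcph, HhP in E.
    assert (Hr := rad_pos x y ts (Hn ts)).
    apply (Rmult_eq_reg_l (C ^ 2)); [|lra].
    replace (C ^ 2 * radius (x ts, y ts)) with (C ^ 2 / radius P * (radius P * rad x y ts))
      by (unfold rad; field; lra).
    rewrite E. field. lra.
  - destruct (Hang ts) as [A1 A2]. rewrite Hts, Hcph, Hsph in *.
    apply injective_projections; symmetry; [exact A1|exact A2].
Qed.

End Covering.

Lemma branch_covers_unifocal x y : (forall t, ~ collision x y t) -> (forall t, newton_at x y t) ->
  kep_C x y 0 <> 0 ->
  forall P, unifocal (kep_alpha x y 0) (kep_beta x y 0) (kep_C x y 0 ^ 2) P -> exists t, P = (x t, y t).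
Proof.
  intros Hn Hnt HC P HP.
  destruct (polar_form (kep_alpha x y 0) (kep_beta x y 0)) as [e [c1 [s1 [He [Hcs [Hal Hbe]]]]]].
  rewrite Hal, Hbe in HP. apply (orbit_covers_unifocal x y Hn Hnt e c1 s1); auto.
Qed.

Lemma sin_cos_sq p : sin p ^ 2 + cos p ^ 2 = 1.
Proof. rewrite <- (sin2_cos2 p). unfold Rsqr. ring. Qed.

Ltac field_nsatz := apply Rminus_diag_uniq; field_simplify;
  [ lazymatch goal with
    | |- ?n / ?d = 0 => replace n with 0 by nsatz; unfold Rdiv; ring
    | |- ?n = 0 => nsatz end | .. ].

Lemma conic_radius_identity C e c1 s1 c s : c1 ^ 2 + s1 ^ 2 = 1 -> s ^ 2 + c ^ 2 = 1 -> 1 - e * c <> 0 ->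
  (C ^ 2 * (c1 * c - s1 * s) / (1 - e * c)) ^ 2 + (C ^ 2 * (s1 * c + c1 * s) / (1 - e * c)) ^ 2
  = (C ^ 2 / (1 - e * c)) ^ 2.
Proof. intros; field_nsatz; auto. Qed.

Lemma conic_ang_mom_identity C e c1 s1 c s : c1 ^ 2 + s1 ^ 2 = 1 -> s ^ 2 + c ^ 2 = 1 -> C <> 0 ->
  1 - e * c <> 0 ->
  C ^ 2 * (c1 * c - s1 * s) / (1 - e * c) * ((- s1 * s + c1 * (c - e)) / C) -
  C ^ 2 * (s1 * c + c1 * s) / (1 - e * c) * ((- c1 * s - s1 * (c - e)) / C) = C.
Proof. intros; field_nsatz; auto. Qed.

Section KeplerOrbit.

Variables e c1 s1 C : R.
Hypothesis He : 0 <= e.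
Hypothesis Hcs : c1 ^ 2 + s1 ^ 2 = 1.
Hypothesis HC : 0 < C.

(* Position and velocity on the conic as functions of the true anomaly p, the axis (c1, s1)
   pointing to the pericentre; the velocity follows from the Keplerian law d(p)/dt = C / r^2. *)
Definition orbit_x p := C ^ 2 * (c1 * cos p - s1 * sin p) / conic_denom e p.
Definition orbit_y p := C ^ 2 * (s1 * cos p + c1 * sin p) / conic_denom e p.
Definition orbit_vx p := (- c1 * sin p - s1 * (cos p - e)) / C.
Definition orbit_vy p := (- s1 * sin p + c1 * (cos p - e)) / C.

Let th t := kepler_time_inv e (t / C ^ 3).
Let X t := orbit_x (th t).
Let Y t := orbit_y (th t).

Lemma anomaly_denom_pos t : 0 < conic_denom e (th t).
Proof. apply admissible_denom_pos, kepler_time_inv_spec; auto. Qed.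

Lemma is_derive_anomaly t : is_derive th t (conic_denom e (th t) * conic_denom e (th t) / C ^ 3).
Proof.
  assert (HC3 : C ^ 3 <> 0) by (apply pow_nonzero; lra).
  eapply is_derive_val.
  - apply (is_derive_Rcomp (kepler_time_inv e) (fun t => t / C ^ 3)); [apply is_derive_kepler_time_inv; auto|].
    apply is_derive_div; [apply is_derive_Rid|apply is_derive_Rconst|auto].
  - unfold th; cbv beta. R_eq. field. lra.
Qed.

Lemma is_derive_orbit_x t : is_derive X t (orbit_vx (th t)).
Proof.
  assert (Hh := anomaly_denom_pos t). assert (Hh0 := Rgt_not_eq _ _ Hh). assert (Hsc := sin_cos_sq (th t)).
  eapply is_derive_val.
  - apply (is_derive_Rcomp orbit_x th); [|apply is_derive_anomaly].
    apply is_derive_div; [|apply is_derive_conic_denom|lra].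
    apply is_derive_scal, is_derive_Rminus; apply is_derive_scal; [apply is_derive_cos|apply is_derive_sin].
  - unfold orbit_vx, conic_denom in *. cbv beta. R_eq. field_nsatz; try split; auto; lra.
Qed.

Lemma is_derive_orbit_y t : is_derive Y t (orbit_vy (th t)).
Proof.
  assert (Hh := anomaly_denom_pos t). assert (Hh0 := Rgt_not_eq _ _ Hh). assert (Hsc := sin_cos_sq (th t)).
  eapply is_derive_val.
  - apply (is_derive_Rcomp orbit_y th); [|apply is_derive_anomaly].
    apply is_derive_div; [|apply is_derive_conic_denom|lra].
    apply is_derive_scal, is_derive_Rplus; apply is_derive_scal; [apply is_derive_cos|apply is_derive_sin].
  - unfold orbit_vy, conic_denom in *. cbv beta. R_eq. field_nsatz; try split; auto; lra.
Qed.

Lemma radius_orbit_at p : 0 < conic_denom e p -> radius (orbit_x p, orbit_y p) = C ^ 2 / conic_denom e p.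
Proof.
  intros Hh. assert (Hh0 := Rgt_not_eq _ _ Hh). assert (Hsc := sin_cos_sq p).
  apply sqrt_lem_1; [nra|apply Rlt_le, Rdiv_lt_0_compat; [apply pow_lt|]; auto|].
  unfold orbit_x, orbit_y, conic_denom in *; cbn [fst snd].
  rewrite conic_radius_identity; auto. ring.
Qed.

Lemma radius_orbit t : radius (X t, Y t) = C ^ 2 / conic_denom e (th t).
Proof. apply radius_orbit_at, anomaly_denom_pos. Qed.

Lemma orbit_no_collision t : ~ collision X Y t.
Proof.
  intros [E1 E2]. assert (Hr := radius_orbit t). rewrite E1, E2 in Hr.
  unfold radius in Hr; cbn [fst snd] in Hr. replace (0 ^ 2 + 0 ^ 2) with 0 in Hr by ring.
  rewrite sqrt_0 in Hr.
  assert (0 < C ^ 2 / conic_denom e (th t)) by (apply Rdiv_lt_0_compat; [apply pow_lt|apply anomaly_denom_pos]; auto).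
  lra.
Qed.

Lemma Derive_orbit t : Derive X t = orbit_vx (th t) /\ Derive Y t = orbit_vy (th t).
Proof. split; apply is_derive_unique; [apply is_derive_orbit_x|apply is_derive_orbit_y]. Qed.

Lemma orbit_newton t : newton_at X Y t.
Proof.
  assert (Hh := anomaly_denom_pos t).
  unfold newton_at. rewrite radius_orbit.
  split; [eexists; apply is_derive_orbit_x|split; [eexists; apply is_derive_orbit_y|split]];
    (eapply is_derive_ext; [intros s; symmetry; apply Derive_orbit|]); eapply is_derive_val.
  - apply (is_derive_Rcomp orbit_vx th); [|apply is_derive_anomaly].
    apply is_derive_div; [|apply is_derive_Rconst|lra].
    apply is_derive_Rminus; apply is_derive_scal; [apply is_derive_sin|].
    apply is_derive_Rminus; [apply is_derive_cos|apply is_derive_Rconst].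
  - unfold X, orbit_x. cbv beta. R_eq. field. split; lra.
  - apply (is_derive_Rcomp orbit_vy th); [|apply is_derive_anomaly].
    apply is_derive_div; [|apply is_derive_Rconst|lra].
    apply is_derive_Rplus; apply is_derive_scal; [apply is_derive_sin|].
    apply is_derive_Rminus; [apply is_derive_cos|apply is_derive_Rconst].
  - unfold Y, orbit_y. cbv beta. R_eq. field. split; lra.
Qed.

Lemma orbit_continuous t : continuous X t /\ continuous Y t.
Proof.
  split; apply (@ex_derive_continuous R_AbsRing R_NormedModule); eexists;
    [apply is_derive_orbit_x|apply is_derive_orbit_y].
Qed.

Lemma orbit_kep_C : kep_C X Y 0 = C.
Proof.
  unfold kep_C. destruct (Derive_orbit 0) as [-> ->].
  assert (Hh := anomaly_denom_pos 0).
  apply conic_ang_mom_identity; [auto|apply sin_cos_sq|lra|unfold conic_denom in Hh; lra].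
Qed.

Lemma orbit_kep_alpha : kep_alpha X Y 0 = e * c1.
Proof.
  assert (Hh := anomaly_denom_pos 0).
  unfold kep_alpha. rewrite orbit_kep_C, (proj2 (Derive_orbit 0)). unfold rad. rewrite radius_orbit.
  unfold X, orbit_x, orbit_vy. R_eq. field. split; lra.
Qed.

Lemma orbit_kep_beta : kep_beta X Y 0 = e * s1.
Proof.
  assert (Hh := anomaly_denom_pos 0).
  unfold kep_beta. rewrite orbit_kep_C, (proj1 (Derive_orbit 0)). unfold rad. rewrite radius_orbit.
  unfold Y, orbit_y, orbit_vx. R_eq. field. split; lra.
Qed.

End KeplerOrbit.

Lemma unifocal_ray_point al be ga v1 v2 : 0 < ga -> 0 < radius (v1, v2) - (al * v1 + be * v2) ->
  unifocal al be ga (ga / (radius (v1, v2) - (al * v1 + be * v2)) * v1,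
                     ga / (radius (v1, v2) - (al * v1 + be * v2)) * v2).
Proof.
  intros Hga Hd. unfold unifocal. cbn [fst snd].
  rewrite radius_scale by (apply Rlt_le, Rdiv_lt_0_compat; auto). field. lra.
Qed.

(* The conic meets the rays directed by n, n + n' and n - n', where n' is n turned by a right
   angle; a line through these three points has to be trivial. *)
Lemma unifocal_line_trivial al be ga n1 n2 a b c : 0 < ga -> (n1, n2) <> (0, 0) ->
  al * n1 + be * n2 <= 0 -> al * (- n2) + be * n1 = 0 ->
  (forall p, unifocal al be ga p -> a * fst p + b * snd p + c = 0) -> a = 0 /\ b = 0.
Proof.
  intros Hga Hn HW Hm H.
  set (W := al * n1 + be * n2) in *.
  set (L1 := radius (n1, n2)). set (L2 := radius (n1 - n2, n2 + n1)).
  assert (HL1 : 0 < L1) by (apply radius_pos; auto).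
  assert (Hq := sum_sq_pos n1 n2 Hn).
  assert (HL12 : L1 < L2) by (unfold L1, L2, radius; cbn [fst snd]; apply sqrt_lt_1; nra).
  assert (HL3 : radius (n1 + n2, n2 - n1) = L2) by (unfold L2, radius; cbn [fst snd]; f_equal; ring).
  assert (EW2 : al * (n1 - n2) + be * (n2 + n1) = W) by (unfold W; lra).
  assert (EW3 : al * (n1 + n2) + be * (n2 - n1) = W) by (unfold W; lra).
  assert (P1 := unifocal_ray_point al be ga n1 n2 Hga ltac:(fold L1 W; lra)).
  assert (P2 := unifocal_ray_point al be ga (n1 - n2) (n2 + n1) Hga ltac:(fold L2; rewrite EW2; lra)).
  assert (P3 := unifocal_ray_point al be ga (n1 + n2) (n2 - n1) Hga ltac:(rewrite HL3, EW3; lra)).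
  fold L1 W in P1. fold L2 in P2. rewrite EW2 in P2. rewrite HL3, EW3 in P3.
  apply H in P1; apply H in P2; apply H in P3. cbn [fst snd] in P1, P2, P3.
  set (k1 := ga / (L1 - W)) in *. set (k2 := ga / (L2 - W)) in *.
  assert (Hk2 : 0 < k2) by (apply Rdiv_lt_0_compat; lra).
  assert (Hk12 : k2 < k1) by (apply Rmult_lt_compat_l; auto; apply Rinv_lt_contravar; nra).
  assert (HB : a * (- n2) + b * n1 = 0).
  { apply (Rmult_eq_reg_l (2 * k2)); [|lra]. rewrite Rmult_0_r, <- (Rminus_diag 0).
    rewrite <- P2 at 1. rewrite <- P3. ring. }
  assert (HA : a * n1 + b * n2 = 0).
  { apply (Rmult_eq_reg_l (k1 - k2)); [|lra]. rewrite Rmult_0_r.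
    replace 0 with ((a * (k1 * n1) + b * (k1 * n2) + c)
      - ((a * (k2 * (n1 - n2)) + b * (k2 * (n2 + n1)) + c) + (a * (k2 * (n1 + n2)) + b * (k2 * (n2 - n1)) + c)) / 2)
      by (rewrite P1, P2, P3; field).
    field. }
  split.
  - apply (Rmult_eq_reg_l (n1 ^ 2 + n2 ^ 2)); [|lra].
    replace ((n1 ^ 2 + n2 ^ 2) * a) with (n1 * (a * n1 + b * n2) - n2 * (a * (- n2) + b * n1)) by ring.
    rewrite HA, HB; ring.
  - apply (Rmult_eq_reg_l (n1 ^ 2 + n2 ^ 2)); [|lra].
    replace ((n1 ^ 2 + n2 ^ 2) * b) with (n2 * (a * n1 + b * n2) + n1 * (a * (- n2) + b * n1)) by ring.
    rewrite HA, HB; ring.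
Qed.

Lemma unifocal_irreducible al be ga : 0 < ga -> irreducible (unifocal al be ga).
Proof.
  intros Hga [a [b [c [Hab H]]]]. apply Hab.
  destruct (classic ((al, be) = (0, 0))) as [E|Hne].
  - injection E; intros -> ->.
    destruct (unifocal_line_trivial 0 0 ga 1 0 a b c Hga) as [-> ->]; auto; [|lra|lra].
    intros E'; injection E'; lra.
  - destruct (unifocal_line_trivial al be ga (- al) (- be) a b c Hga) as [-> ->]; auto.
    + intros E; injection E; intros; apply Hne; f_equal; lra.
    + nra.
    + ring.
Qed.

Lemma unifocal_params_unique (K : R * R -> Prop) al be ga al' be' ga' :
  irreducible K -> (exists p, K p) ->
  (forall p, K p -> unifocal al be ga p) -> (forall p, K p -> unifocal al' be' ga' p) ->
  al' = al /\ be' = be /\ ga' = ga.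
Proof.
  intros Hirr [p0 Hp0] HK HK'.
  assert (Hlin : forall p, K p -> (al' - al) * fst p + (be' - be) * snd p + (ga' - ga) = 0).
  { intros p Hp. generalize (HK p Hp) (HK' p Hp). unfold unifocal. lra. }
  destruct (classic ((al' - al, be' - be) = (0, 0))) as [E|E].
  - injection E; intros E2 E1. specialize (Hlin p0 Hp0). rewrite E1, E2 in Hlin. lra.
  - exfalso. apply Hirr. exists (al' - al), (be' - be), (ga' - ga). split; auto.
Qed.

Lemma irreducible_orbit_no_collision (K : R * R -> Prop) x y :
  extended_solution x y -> (forall p, K p <-> exists t, p = (x t, y t)) -> irreducible K ->
  forall t, ~ collision x y t.
Proof.
  intros Hes HK Hirr t0 Hc. destruct (collision_rectilinear x y t0 Hes Hc) as [u1 [u2 [Hu Hl]]].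
  apply Hirr. exists u2, (- u1), 0. split.
  - intro E; injection E; intros; apply Hu; f_equal; lra.
  - intros p Hp. apply HK in Hp. destruct Hp as [t ->]. cbn [fst snd]. specialize (Hl t). lra.
Qed.

(* With zero angular momentum the direction (alpha, beta) of the position is frozen. *)
Lemma irreducible_orbit_kep_C (K : R * R -> Prop) x y :
  (forall t, ~ collision x y t) -> (forall t, newton_at x y t) ->
  (forall p, K p <-> exists t, p = (x t, y t)) -> irreducible K -> kep_C x y 0 <> 0.
Proof.
  intros Hn Hnt HK Hirr HC. apply Hirr. exists (kep_beta x y 0), (- kep_alpha x y 0), 0.
  assert (Hdir : forall t, kep_alpha x y 0 = x t / rad x y t /\ kep_beta x y 0 = y t / rad x y t).
  { intros t. destruct (kepler_constants x y Hn Hnt t) as [h1 [h2 h3]].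
    rewrite <- h2, <- h3. unfold kep_alpha, kep_beta. rewrite h1, HC. split; ring. }
  split.
  - intros E; injection E; intros E1 E2. destruct (Hdir 0) as [k1 k2].
    assert (Hr := rad_pos x y 0 (Hn 0)). assert (H2 := rad_sq x y 0).
    assert (Hs : (x 0 / rad x y 0) ^ 2 + (y 0 / rad x y 0) ^ 2 = 1).
    { replace ((x 0 / rad x y 0) ^ 2 + (y 0 / rad x y 0) ^ 2) with ((x 0 ^ 2 + y 0 ^ 2) / rad x y 0 ^ 2)
        by (field; lra).
      rewrite <- H2. field; lra. }
    rewrite <- k1, <- k2, E2 in Hs. assert (kep_alpha x y 0 = 0) by lra. rewrite H in Hs. lra.
  - intros p Hp. apply HK in Hp. destruct Hp as [t ->]. cbn [fst snd].
    destruct (Hdir t) as [k1 k2]. rewrite k1, k2. assert (Hr := rad_pos x y t (Hn t)). field. lra.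
Qed.

Lemma branch_unifocal (K : R * R -> Prop) : keplerian_branch K -> irreducible K ->
  exists al be ga, 0 < ga /\ (forall p, K p <-> unifocal al be ga p) /\
    (forall al' be' ga', 0 < ga' -> (forall p, K p <-> unifocal al' be' ga' p) ->
       al' = al /\ be' = be /\ ga' = ga).
Proof.
  intros [x [y [Hes HK]]] Hirr.
  assert (Hn := irreducible_orbit_no_collision K x y Hes HK Hirr).
  assert (Hnt : forall t, newton_at x y t) by (intros t; apply Hes, Hn).
  assert (HC := irreducible_orbit_kep_C K x y Hn Hnt HK Hirr).
  assert (HKu : forall p, K p <-> unifocal (kep_alpha x y 0) (kep_beta x y 0) (kep_C x y 0 ^ 2) p).
  { intros p; rewrite HK; split.
    - intros [t ->]. apply orbit_unifocal_constants; auto.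
    - apply branch_covers_unifocal; auto. }
  exists (kep_alpha x y 0), (kep_beta x y 0), (kep_C x y 0 ^ 2).
  split; [apply pow2_gt_0; auto|split; auto].
  intros al' be' ga' _ HK'. apply (unifocal_params_unique K); auto.
  - exists (x 0, y 0). apply HK. exists 0; reflexivity.
  - intros p; apply HKu.
  - intros p; apply HK'.
Qed.

Lemma unifocal_branch al be ga : 0 < ga ->
  keplerian_branch (unifocal al be ga) /\ irreducible (unifocal al be ga).
Proof.
  intros Hga. split; [|apply unifocal_irreducible; auto].
  destruct (polar_form al be) as [e [c1 [s1 [He [Hcs [-> ->]]]]]].
  set (C := sqrt ga). assert (HC : 0 < C) by (apply sqrt_lt_R0; auto).
  assert (HC2 : C ^ 2 = ga) by (unfold C; rewrite pow2_sqrt; lra).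
  set (x := fun t => orbit_x e c1 s1 C (kepler_time_inv e (t / C ^ 3))).
  set (y := fun t => orbit_y e c1 s1 C (kepler_time_inv e (t / C ^ 3))).
  assert (Hn : forall t, ~ collision x y t) by (apply orbit_no_collision; auto).
  assert (Hnt : forall t, newton_at x y t) by (apply orbit_newton; auto).
  assert (HC0 : kep_C x y 0 = C) by (apply orbit_kep_C; auto).
  exists x, y. split.
  - split; [apply orbit_continuous; auto|split; [auto|intros t0 Hc; exfalso; apply (Hn t0 Hc)]].
  - assert (HA : kep_alpha x y 0 = e * c1) by (apply orbit_kep_alpha; auto).
    assert (HB : kep_beta x y 0 = e * s1) by (apply orbit_kep_beta; auto).
    intros p. rewrite <- HC2, <- HC0, <- HA, <- HB. split.
    + apply branch_covers_unifocal; auto. rewrite HC0; lra.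
    + intros [t ->]. apply orbit_unifocal_constants; auto.
Qed.

Lemma branches_through_point (A : R * R) : A <> (0, 0) ->
  exists n1 n2 n3 d, (n1, n2, n3) <> (0, 0, 0) /\
    (forall al be ga, 0 < ga -> (unifocal al be ga A <-> n1 * al + n2 * be + n3 * ga = d)) /\
    (exists al be, n1 * al + n2 * be + n3 * 0 = d).
Proof.
  destruct A as [xa ya]. intros HA. assert (Hq := sum_sq_pos xa ya HA).
  exists xa, ya, 1, (radius (xa, ya)). split; [intro E; injection E; lra|split].
  - intros al be ga _. unfold unifocal; cbn [fst snd]. lra.
  - exists (radius (xa, ya) * xa / (xa ^ 2 + ya ^ 2)), (radius (xa, ya) * ya / (xa ^ 2 + ya ^ 2)).
    field. lra.
Qed.

Definition line_of_branches_through A B p1 p2 p3 d1 d2 d3 :=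
  forall al be ga, 0 < ga ->
    (unifocal al be ga A /\ unifocal al be ga B <->
     exists t, al = p1 + t * d1 /\ be = p2 + t * d2 /\ ga = p3 + t * d3).

(* For fixed gamma, passing through A and B are two independent linear conditions on (alpha, beta). *)
Lemma branches_through_independent_points xa ya xb yb : xa * yb - xb * ya <> 0 ->
  exists p1 p2 d1 d2 d3, (d1, d2, d3) <> (0, 0, 0) /\
    line_of_branches_through (xa, ya) (xb, yb) p1 p2 0 d1 d2 d3.
Proof.
  intros HD. set (D := xa * yb - xb * ya) in *.
  set (rA := radius (xa, ya)). set (rB := radius (xb, yb)).
  exists ((rA * yb - rB * ya) / D), ((xa * rB - xb * rA) / D), (ya - yb), (xb - xa), D.
  split; [intro E; injection E; intros; apply HD; auto|].
  intros al be ga Hga. unfold unifocal; cbn [fst snd]. fold rA rB. split.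
  - intros [U1 U2]. exists (ga / D). rewrite U1, U2. unfold D in *. split; [|split]; field; auto.
  - intros [t [-> [-> ->]]]. unfold D in *. split; field; auto.
Qed.

(* For B = - lam A, the two conditions force gamma = 2 lam |A| / (1 + lam) and leave the component
   of (alpha, beta) orthogonal to A free. *)
Lemma branches_through_opposite_points xa ya lam : (xa, ya) <> (0, 0) -> 0 < lam ->
  exists p1 p2 p3 d1 d2, (d1, d2, 0) <> (0, 0, 0) /\ 0 < p3 /\
    line_of_branches_through (xa, ya) (- lam * xa, - lam * ya) p1 p2 p3 d1 d2 0.
Proof.
  intros HA Hlam. assert (Hq := sum_sq_pos xa ya HA).
  set (rA := radius (xa, ya)). assert (HrA : 0 < rA) by (apply radius_pos; auto).
  assert (HrB : radius (- lam * xa, - lam * ya) = lam * rA).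
  { replace (- lam * xa) with (lam * - xa) by ring. replace (- lam * ya) with (lam * - ya) by ring.
    rewrite radius_scale by lra. unfold rA, radius; cbn [fst snd]. do 2 f_equal. ring. }
  set (g0 := 2 * lam * rA / (1 + lam)).
  assert (Hg0 : 0 < g0) by (apply Rdiv_lt_0_compat; nra).
  set (c := (rA - g0) / (xa ^ 2 + ya ^ 2)).
  exists (c * xa), (c * ya), g0, ya, (- xa). split; [|split; auto].
  { intro E; injection E; intros. apply HA. f_equal; lra. }
  intros al be ga Hga. unfold unifocal; cbn [fst snd]. rewrite HrB. fold rA. split.
  - intros [U1 U2].
    assert (Hg : ga = g0) by (unfold g0; apply (Rmult_eq_reg_l (1 + lam)); [field_simplify|]; nra).
    exists ((al * ya - be * xa) / (xa ^ 2 + ya ^ 2)).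
    unfold c. replace (rA - g0) with (al * xa + be * ya) by lra.
    split; [|split]; [field; lra|field; lra|lra].
  - intros [t [-> [-> ->]]]. unfold c, g0. split; field; lra.
Qed.

Lemma not_same_ray_nonzero A B : ~ same_ray A B -> A <> (0, 0) /\ B <> (0, 0).
Proof.
  intros Hns. destruct A as [xa ya], B as [xb yb].
  assert (HA : (xa, ya) <> (0, 0)).
  { intros E; injection E; intros -> ->; apply Hns.
    destruct (classic ((xb, yb) = (0, 0))) as [E'|E'].
    - injection E'; intros -> ->. exists 1, 0, 0, 0.
      repeat split; try lra; [intro E2; injection E2; lra|f_equal; ring..].
    - exists xb, yb, 0, 1. repeat split; try lra; auto; f_equal; ring. }
  split; auto. intros E; injection E; intros -> ->; apply Hns.
  exists xa, ya, 1, 0. repeat split; try lra; auto; f_equal; ring.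
Qed.

Lemma opposite_of_det_zero xa ya xb yb : (xa, ya) <> (0, 0) -> ~ same_ray (xa, ya) (xb, yb) ->
  xa * yb - xb * ya = 0 -> exists lam, 0 < lam /\ xb = - lam * xa /\ yb = - lam * ya.
Proof.
  intros HA Hns HD. assert (Hq := sum_sq_pos xa ya HA).
  set (mu := (xa * xb + ya * yb) / (xa ^ 2 + ya ^ 2)).
  assert (Exb : xb = mu * xa).
  { unfold mu. apply (Rmult_eq_reg_r (xa ^ 2 + ya ^ 2)); [|lra].
    replace (xb * (xa ^ 2 + ya ^ 2)) with ((xa * xb + ya * yb) * xa - ya * (xa * yb - xb * ya)) by ring.
    rewrite HD. field. lra. }
  assert (Eyb : yb = mu * ya).
  { unfold mu. apply (Rmult_eq_reg_r (xa ^ 2 + ya ^ 2)); [|lra].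
    replace (yb * (xa ^ 2 + ya ^ 2)) with ((xa * xb + ya * yb) * ya + xa * (xa * yb - xb * ya)) by ring.
    rewrite HD. field. lra. }
  exists (- mu). split; [|split; [rewrite Exb|rewrite Eyb]; ring].
  apply Ropp_0_gt_lt_contravar, Rnot_le_lt. intro Hm. apply Hns. exists xa, ya, 1, mu.
  repeat split; auto; try lra; [f_equal; ring|rewrite Exb, Eyb; reflexivity].
Qed.

Lemma O_in_open_segment_det xa ya xb yb : O_in_open_segment (xa, ya) (xb, yb) -> xa * yb - xb * ya = 0.
Proof.
  intros [s [Hs [E1 E2]]]. cbn [fst snd] in E1, E2.
  apply (Rmult_eq_reg_l (1 - s)); [|lra]. rewrite Rmult_0_r.
  replace ((1 - s) * (xa * yb - xb * ya))
    with (((1 - s) * xa + s * xb) * yb - ((1 - s) * ya + s * yb) * xb) by ring.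
  rewrite E1, E2. ring.
Qed.

Lemma branches_through_two_points (A B : R * R) : ~ same_ray A B ->
  exists p1 p2 p3 d1 d2 d3, (d1, d2, d3) <> (0, 0, 0) /\
    (forall al be ga, 0 < ga ->
       (unifocal al be ga A /\ unifocal al be ga B <->
        exists t, al = p1 + t * d1 /\ be = p2 + t * d2 /\ ga = p3 + t * d3)) /\
    (~ O_in_open_segment A B -> exists t, p3 + t * d3 = 0) /\
    (O_in_open_segment A B ->
       (forall t, 0 < p3 + t * d3) /\ (forall t t', p3 + t * d3 = p3 + t' * d3)).
Proof.
  intros Hns. destruct (not_same_ray_nonzero A B Hns) as [HA _].
  destruct A as [xa ya], B as [xb yb].
  destruct (Req_dec (xa * yb - xb * ya) 0) as [HD|HD].
  - destruct (opposite_of_det_zero xa ya xb yb HA Hns HD) as [lam [Hlam [-> ->]]].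
    destruct (branches_through_opposite_points xa ya lam HA Hlam) as [p1 [p2 [p3 [d1 [d2 [Hd [Hp3 Hline]]]]]]].
    exists p1, p2, p3, d1, d2, 0. split; [|split; [|split]]; auto.
    + intros Hno. exfalso. apply Hno. exists (1 / (1 + lam)). cbn [fst snd].
      split; [split; apply Rmult_lt_reg_r with (1 + lam); field_simplify; lra|split; field; lra].
    + intros _. split; intros; lra.
  - destruct (branches_through_independent_points xa ya xb yb HD) as [p1 [p2 [d1 [d2 [d3 [Hd Hline]]]]]].
    exists p1, p2, 0, d1, d2, d3. split; [|split; [|split]]; auto.
    + intros _. exists 0. ring.
    + intros Hseg. exfalso. apply HD, O_in_open_segment_det, Hseg.
Qed.

Theorem lemma3 :
  (* bijection  branch |-> (alpha, beta, gamma)  onto H = R x R x ]0, +oo[ *)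
  (forall K : R * R -> Prop, keplerian_branch K -> irreducible K ->
     exists al be ga, 0 < ga /\ (forall p, K p <-> unifocal al be ga p) /\
       (forall al' be' ga', 0 < ga' -> (forall p, K p <-> unifocal al' be' ga' p) ->
          al' = al /\ be' = be /\ ga' = ga)) /\
  (forall al be ga, 0 < ga ->
     keplerian_branch (unifocal al be ga) /\ irreducible (unifocal al be ga)) /\
  (* branches through a point A <> O : a plane cutting {gamma = 0} *)
  (forall A : R * R, A <> (0, 0) ->
     exists n1 n2 n3 d, (n1, n2, n3) <> (0, 0, 0) /\
       (forall al be ga, 0 < ga ->
          (unifocal al be ga A <-> n1 * al + n2 * be + n3 * ga = d)) /\
       (exists al be, n1 * al + n2 * be + n3 * 0 = d)) /\
  (* branches through A and B not on a common ray : a straight line *)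
  (forall A B : R * R, ~ same_ray A B ->
     exists p1 p2 p3 d1 d2 d3, (d1, d2, d3) <> (0, 0, 0) /\
       (forall al be ga, 0 < ga ->
          (unifocal al be ga A /\ unifocal al be ga B <->
           exists t, al = p1 + t * d1 /\ be = p2 + t * d2 /\ ga = p3 + t * d3)) /\
       (~ O_in_open_segment A B -> exists t, p3 + t * d3 = 0) /\
       (O_in_open_segment A B ->
          (forall t, 0 < p3 + t * d3) /\
          (forall t t', p3 + t * d3 = p3 + t' * d3))).
Proof.
  split; [exact branch_unifocal|].
  split; [exact unifocal_branch|].
  split; [exact branches_through_point|exact branches_through_two_points].
Qed.
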